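(* In the setting described in the context, assume moreover that there is $\beta$ with $0<\beta<\alpha$ such that for every $\delta>0$ there is a constant $c_\delta$ with $|\frac{\partial}{\partial x}u^\epsilon(x,t)|\leq c_\delta\,\epsilon^{-\beta}$ for all $x\in\mathbb{R}$, $t\in[0,\delta]$, $\epsilon\in(0,1)$. Then the family $(u^\epsilon,v^\epsilon)$ is a weak asymptotic method for the equation $\frac{\partial v}{\partial t}+\frac{\partial}{\partial x}(uv)=0$, i.e. for every $\psi\in\mathcal{C}^\infty(\mathbb{R})$ with compact support and every $t\geq0$, $$\int_{\mathbb{R}}\Big[\frac{\partial v^\epsilon}{\partial t}(x,t)\psi(x)-u^\epsilon(x,t)v^\epsilon(x,t)\psi'(x)\Big]dx\longrightarrow 0\quad(\epsilon\to0).$$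
   Context: Let $\mathcal{C}_b(\mathbb{R})$ denote the Banach space of bounded continuous real functions on $\mathbb{R}$ with the sup norm. For a real function $u$ set $u^+=\max(0,u)$, $u^-=\max(0,-u)$. For $0<\epsilon<1$ let $u^\epsilon:\mathbb{R}\times[0,\infty)\to\mathbb{R}$ be $2\pi$-periodic in $x$, differentiable in $x$, with $t\mapsto u^\epsilon(\cdot,t)$ continuous from $[0,\infty)$ into $\mathcal{C}_b(\mathbb{R})$, and assume there is $M_1>0$ with $|u^\epsilon(x,t)|\leq M_1$ for all $\epsilon,x,t\ge0$. Let $v_0^\epsilon\in\mathcal{C}_b(\mathbb{R})$ be $2\pi$-periodic with $\sup_{\epsilon}\int_{-\pi}^{\pi}|v_0^\epsilon|dx<\infty$. Let $X^\epsilon$ be the unique global $\mathcal{C}^1$ solution $[0,\infty)\to\mathcal{C}_b(\mathbb{R})$ of $$\frac{d}{dt}X^\epsilon(x,t)=\frac{1}{\epsilon}\big[X^\epsilon(x-\epsilon,t)u^{\epsilon+}(x-\epsilon,t)-X^\epsilon(x,t)|u^{\epsilon}(x,t)|+X^\epsilon(x+\epsilon,t)u^{\epsilon-}(x+\epsilon,t)\big],\quad X^\epsilon(x,0)=v_0^\epsilon(x).$$ Let $\phi\in\mathcal{C}^\infty(\mathbb{R})$ have compact support with $\int\phi=1$, let $\alpha\in]0,1]$, $\phi_{\epsilon^\alpha}(x)=\epsilon^{-\alpha}\phi(x/\epsilon^\alpha)$, and define $v^\epsilon(x,t)=(X^\epsilon(\cdot,t)*\phi_{\epsilon^\alpha})(x)$.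 *)

From Stdlib Require Import Reals.
From Coquelicot Require Export Coquelicot.
Open Scope R_scope.

Definition pospart (a : R) : R := Rmax 0 a.
Definition negpart (a : R) : R := Rmax 0 (- a).

Definition Rint_R (f : R -> R) : R :=
  RInt_gen f (Rbar_locally m_infty) (Rbar_locally p_infty).

Definition in_Cb (f : R -> R) : Prop :=
  (forall x, continuous f x) /\ exists M, forall x, Rabs (f x) <= M.

Definition periodic_2pi (f : R -> R) : Prop := forall x, f (x + 2 * PI) = f x.

Definition smooth (f : R -> R) : Prop := forall (n : nat) (x : R), ex_derive_n f n x.

Definition compact_support (f : R -> R) : Prop :=
  exists A, forall x, A < Rabs x -> f x = 0.

(* t |-> w(.,t) is continuous from [0,oo) into C_b(R) (sup norm) *)
Definition cont_into_Cb (w : R -> R -> R) : Prop :=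
  (forall t, 0 <= t -> in_Cb (fun x => w x t)) /\
  forall t, 0 <= t -> forall eta, 0 < eta -> exists d, 0 < d /\
    forall s, 0 <= s -> Rabs (s - t) < d -> forall x, Rabs (w x s - w x t) <= eta.

(* dw is the derivative of t |-> w(.,t) on [0,oo) in C_b(R) (sup norm),
   one-sided at t = 0 *)
Definition Cb_deriv (w dw : R -> R -> R) : Prop :=
  forall t, 0 <= t -> forall eta, 0 < eta -> exists d, 0 < d /\
    forall s, 0 <= s -> s <> t -> Rabs (s - t) < d ->
      forall x, Rabs ((w x s - w x t) / (s - t) - dw x t) <= eta.

(* X is a global C^1 solution [0,oo) -> C_b(R) of the lattice ODE with initial datum v0,
   with time derivative Xd *)
Definition is_C1_solution (eps : R) (u : R -> R -> R) (v0 : R -> R)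
  (X Xd : R -> R -> R) : Prop :=
  cont_into_Cb X /\ cont_into_Cb Xd /\ Cb_deriv X Xd /\
  (forall x, X x 0 = v0 x) /\
  (forall x t, 0 <= t ->
     Xd x t = / eps * (X (x - eps) t * pospart (u (x - eps) t)
                       - X x t * Rabs (u x t)
                       + X (x + eps) t * negpart (u (x + eps) t))).

(* l is the time derivative of w at t, taken within [0,oo) (one-sided at t = 0) *)
Definition tderiv (w : R -> R) (t l : R) : Prop :=
  filterlim (fun h => (w (t + h) - w t) / h)
    (within (fun h => h <> 0 /\ 0 <= t + h) (locally 0)) (locally l).

(* mollifier phi_{eps^alpha} and v^eps = X^eps(.,t) * phi_{eps^alpha} *)
Definition mollif (phi : R -> R) (alpha eps : R) (y : R) : R :=
  / Rpower eps alpha * phi (y / Rpower eps alpha).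

Definition vconv (phi : R -> R) (alpha eps : R) (X : R -> R -> R) (x t : R) : R :=
  Rint_R (fun y => X (x - y) t * mollif phi alpha eps y).

(* The time derivative of v^eps is the mollified upwind difference of X^eps.
   Summation by parts against psi leaves two error terms: the mollified fluxes
   X^eps u^eps+- against second-order Taylor remainders of psi, of size O(eps),
   and the commutator between multiplication by u^eps and the mollifier, of size
   O(eps^(alpha - beta)) by the Lipschitz bound on u^eps over the support
   eps^alpha of the mollifier. Both carry the local L1 mass of X^eps as a factor,
   and that mass is bounded uniformly in eps: X^eps is 2pi-periodic by uniqueness,
   and the upwind scheme is positive and conservative, so the L1 norm of X^eps
   over a period does not increase in time. *)

From Stdlib Require Import Reals Lra Classical Factorial.
From Coquelicot Require Import Coquelicot.
Open Scope R_scope.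

Lemma is_RInt_gen_vanishing (f : R -> R) (Fa Fb : (R -> Prop) -> Prop) :
  Filter Fa -> Filter Fb ->
  filter_prod Fa Fb (fun ab => forall x, Rmin (fst ab) (snd ab) < x < Rmax (fst ab) (snd ab) -> f x = 0) ->
  is_RInt_gen f Fa Fb 0.
Proof.
intros HFa HFb Hf P HP. unfold filtermapi.
apply (filter_imp (F := filter_prod Fa Fb) (fun ab => forall x, Rmin (fst ab) (snd ab) < x < Rmax (fst ab) (snd ab) -> f x = 0)); [|exact Hf].
intros [a b] Hab. exists 0. split; [|exact (locally_singleton _ _ HP)].
apply (is_RInt_ext (fun _ => 0)); [intros x Hx; symmetry; exact (Hab x Hx)|].
pose proof (is_RInt_const a b 0) as H0. unfold scal in H0; simpl in H0; unfold mult in H0; simpl in H0.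
rewrite Rmult_0_r in H0. exact H0.
Qed.

Lemma Rint_R_compact_support (f g : R -> R) (B : R) :
  0 <= B -> ex_RInt g (-B) B ->
  (forall x, Rabs x <= B -> f x = g x) -> (forall x, B < Rabs x -> f x = 0) ->
  Rint_R f = RInt g (-B) B.
Proof.
intros HB Hg Hfg Hf. unfold Rint_R. apply is_RInt_gen_unique.
assert (Hleft : is_RInt_gen f (Rbar_locally m_infty) (at_point (-B)) 0).
{ apply is_RInt_gen_vanishing; try apply filter_filter.
  exists (fun a => a < -B) (fun b => b = -B); [exists (-B); auto|reflexivity|].
  intros a b Ha Hb x Hx; simpl in *; subst b. apply Hf.
  rewrite Rmax_right in Hx by lra. rewrite Rabs_left; lra. }
assert (Hmid : is_RInt_gen f (at_point (-B)) (at_point B) (RInt g (-B) B)).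
{ apply is_RInt_gen_at_point. apply (is_RInt_ext g); [|exact (RInt_correct g _ _ Hg)].
  intros x Hx. symmetry. apply Hfg. rewrite Rmin_left, Rmax_right in Hx by lra.
  apply Rabs_le; lra. }
assert (Hright : is_RInt_gen f (at_point B) (Rbar_locally p_infty) 0).
{ apply is_RInt_gen_vanishing; try apply filter_filter.
  exists (fun a => a = B) (fun b => B < b); [reflexivity|exists B; auto|].
  intros a b Ha Hb x Hx; simpl in *; subst a. apply Hf.
  rewrite Rmin_left in Hx by lra. rewrite Rabs_right; lra. }
pose proof (is_RInt_gen_Chasles f _ _ _ Hleft (is_RInt_gen_Chasles f _ _ _ Hmid Hright)) as H.
change (is_RInt_gen f (Rbar_locally m_infty) (Rbar_locally p_infty) (0 + (RInt g (-B) B + 0))) in H.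
rewrite Rplus_0_l, Rplus_0_r in H. exact H.
Qed.

Definition contR (f : R -> R) := forall x, continuous f x.

Lemma contR_mult f g : contR f -> contR g -> contR (fun y => f y * g y).
Proof. intros Hf Hg x. apply (continuous_mult f g); auto. Qed.
Lemma contR_plus f g : contR f -> contR g -> contR (fun y => f y + g y).
Proof. intros Hf Hg x. apply (continuous_plus f g); auto. Qed.
Lemma contR_minus f g : contR f -> contR g -> contR (fun y => f y - g y).
Proof. intros Hf Hg x. apply (continuous_minus f g); auto. Qed.
Lemma contR_const c : contR (fun _ => c).
Proof. intros x. apply continuous_const. Qed.
Lemma contR_id : contR (fun y => y).
Proof. intros x. apply continuous_id. Qed.
Lemma contR_abs f : contR f -> contR (fun y => Rabs (f y)).
Proof. intros Hf x. apply continuous_Rabs_comp. auto. Qed.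
Lemma contR_comp f g : contR f -> contR g -> contR (fun y => g (f y)).
Proof. intros Hf Hg x. apply (continuous_comp f g); auto. Qed.
Lemma contR_ext f g : (forall x, f x = g x) -> contR f -> contR g.
Proof. intros H Hf x. apply (continuous_ext f); auto. Qed.
Lemma contR_scal c f : contR f -> contR (fun y => c * f y).
Proof. intros Hf. apply contR_mult; [apply contR_const|exact Hf]. Qed.
Lemma contR_shift f c : contR f -> contR (fun y => f (y + c)).
Proof.
intros Hf. apply (contR_comp (fun y => y + c) f); auto.
apply contR_plus; [apply contR_id|apply contR_const].
Qed.
Lemma contR_reflect f x : contR f -> contR (fun y => f (x - y)).
Proof.
intros Hf. apply (contR_comp (fun y => x - y) f); auto.
apply contR_minus; [apply contR_const|apply contR_id].
Qed.
Lemma contR_pointwise f : contR f -> forall x, continuity_pt f x.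
Proof. intros Hf x. apply continuity_pt_filterlim. apply Hf. Qed.
Lemma contR_pospart f : contR f -> contR (fun y => pospart (f y)).
Proof.
intros Hf. apply (contR_ext (fun y => / 2 * (f y + Rabs (f y)))).
- intros y. unfold pospart, Rmax, Rabs. destruct Rle_dec, Rcase_abs; lra.
- apply contR_scal, contR_plus, contR_abs; auto.
Qed.
Lemma contR_negpart f : contR f -> contR (fun y => negpart (f y)).
Proof.
intros Hf. apply (contR_ext (fun y => / 2 * (Rabs (f y) - f y))).
- intros y. unfold negpart, Rmax, Rabs. destruct Rle_dec, Rcase_abs; lra.
- apply contR_scal, contR_minus, Hf. apply contR_abs, Hf.
Qed.

Lemma ex_RInt_contR f a b : contR f -> ex_RInt f a b.
Proof. intros Hf. exact (ex_RInt_continuous (V := R_CompleteNormedModule) f a b (fun z _ => Hf z)). Qed.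

Lemma RInt_extR (f g : R -> R) a b :
  (forall x, Rmin a b < x < Rmax a b -> f x = g x) -> RInt f a b = RInt g a b.
Proof. apply RInt_ext. Qed.
Lemma RInt_plusR f g a b : contR f -> contR g ->
  RInt (fun y => f y + g y) a b = RInt f a b + RInt g a b.
Proof. intros Hf Hg. apply (RInt_plus f g); apply ex_RInt_contR; auto. Qed.
Lemma RInt_minusR f g a b : contR f -> contR g ->
  RInt (fun y => f y - g y) a b = RInt f a b - RInt g a b.
Proof. intros Hf Hg. apply (RInt_minus f g); apply ex_RInt_contR; auto. Qed.
Lemma RInt_scalR f a b c : contR f -> RInt (fun y => c * f y) a b = c * RInt f a b.
Proof. intros Hf. apply (RInt_scal f a b c); apply ex_RInt_contR; auto. Qed.
Lemma RInt_constR a b c : RInt (fun _ => c) a b = c * (b - a).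
Proof. rewrite RInt_const. unfold scal; simpl; unfold mult; simpl. ring. Qed.
Lemma RInt_ChaslesR f a b c : contR f -> RInt f a b + RInt f b c = RInt f a c.
Proof. intros Hf. apply (RInt_Chasles f); apply ex_RInt_contR; auto. Qed.
Lemma RInt_swapR f a b : contR f -> RInt f b a = - RInt f a b.
Proof. intros Hf. rewrite <- (opp_RInt_swap f a b) by (apply ex_RInt_contR; auto). reflexivity. Qed.
Lemma RInt_leR f g a b : a <= b -> contR f -> contR g ->
  (forall x, a <= x <= b -> f x <= g x) -> RInt f a b <= RInt g a b.
Proof. intros Hab Hf Hg H. apply RInt_le; auto; try apply ex_RInt_contR; auto. intros; apply H; lra. Qed.
Lemma RInt_absR f a b : a <= b -> contR f -> Rabs (RInt f a b) <= RInt (fun y => Rabs (f y)) a b.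
Proof. intros Hab Hf. apply abs_RInt_le; auto. apply ex_RInt_contR; auto. Qed.
Lemma RInt_ge0R f a b : a <= b -> contR f -> (forall x, a <= x <= b -> 0 <= f x) -> 0 <= RInt f a b.
Proof.
intros Hab Hf H. rewrite <- (Rmult_0_l (b - a)), <- RInt_constR.
apply RInt_leR; auto. apply contR_const.
Qed.
Lemma RInt_zeroR f a b : (forall x, Rmin a b < x < Rmax a b -> f x = 0) -> RInt f a b = 0.
Proof. intros H. rewrite (RInt_ext f (fun _ => 0)) by auto. rewrite RInt_constR. lra. Qed.
Lemma RInt_subinterval_le f a b c d : a <= c -> c <= d -> d <= b -> contR f ->
  (forall x, 0 <= f x) -> RInt f c d <= RInt f a b.
Proof.
intros Hac Hcd Hdb Hf Hpos.
rewrite <- (RInt_ChaslesR f a c b), <- (RInt_ChaslesR f c d b) by auto.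
assert (0 <= RInt f a c) by (apply RInt_ge0R; auto).
assert (0 <= RInt f d b) by (apply RInt_ge0R; auto).
lra.
Qed.

Lemma RInt_shiftR f a b c : contR f -> RInt (fun y => f (y + c)) a b = RInt f (a + c) (b + c).
Proof.
intros Hf. rewrite <- (Rmult_1_l a) at 2. rewrite <- (Rmult_1_l b) at 2.
rewrite <- RInt_comp_lin by (apply ex_RInt_contR; auto).
apply RInt_ext. intros x _. unfold scal; simpl; unfold mult; simpl. rewrite !Rmult_1_l. auto.
Qed.
Lemma RInt_reflect f x h : contR f -> RInt (fun y => f (x - y)) (-h) h = RInt f (x - h) (x + h).
Proof.
intros Hf.
assert (E := RInt_comp_lin f (-1) x (-h) h (ex_RInt_contR f _ _ Hf)).
change (RInt (fun y : R => -1 * f (-1 * y + x)) (-h) h = RInt f (-1 * -h + x) (-1 * h + x)) in E.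
rewrite (RInt_ext (fun y : R => -1 * f (-1 * y + x)) (fun y => -1 * f (x - y))) in E
  by (intros; do 2 f_equal; ring).
rewrite RInt_scalR in E by (apply contR_reflect; auto).
replace (-1 * - h + x) with (x + h) in E by ring. replace (-1 * h + x) with (x - h) in E by ring.
rewrite (RInt_swapR f (x - h) (x + h)) in E by auto. lra.
Qed.

Lemma contR_RInt (g : R -> R) (c : R) : contR g -> contR (fun z => RInt g c z).
Proof.
intros Hg z. apply (continuous_RInt_1 g c z (fun z => RInt g c z)).
apply filter_forall. intros w. apply (RInt_correct (V := R_CompleteNormedModule)). apply ex_RInt_contR; auto.
Qed.

Lemma real_induction (P : R -> Prop) (T : R) : 0 <= T ->
 (forall s, 0 <= s <= T -> (forall r, 0 <= r < s -> P r) -> P s) ->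
 (forall s, 0 <= s < T -> (forall r, 0 <= r <= s -> P r) ->
    exists d, 0 < d /\ forall r, s < r < s + d -> P r) ->
 forall s, 0 <= s <= T -> P s.
Proof.
intros HT H0 H1.
set (E := fun tau => tau <= T /\ forall r, 0 <= r <= tau -> P r).
assert (P0 : P 0).
{ apply H0; [lra|]. intros; lra. }
assert (HE0 : E 0).
{ split; auto. intros r Hr. replace r with 0 by lra. auto. }
assert (Hb : bound E). { exists T. intros x [Hx _]. auto. }
destruct (completeness E Hb (ex_intro _ 0 HE0)) as [m [Hm1 Hm2]].
assert (Hm0 : 0 <= m) by (apply Hm1; auto).
assert (HmT : m <= T) by (apply Hm2; intros x [Hx _]; auto).
assert (HA : forall r, 0 <= r < m -> P r).
{ intros r Hr.
  destruct (classic (exists tau, E tau /\ r < tau)) as [[tau [[_ Htau] Hrt]]|Hn].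
  - apply Htau; lra.
  - exfalso. assert (m <= r).
    { apply Hm2. intros x Hx. destruct (Rle_dec x r); auto.
      exfalso; apply Hn; exists x; split; auto; lra. }
    lra. }
assert (Pm : P m) by (apply H0; auto).
assert (Em : forall r, 0 <= r <= m -> P r).
{ intros r Hr. destruct (Req_dec r m). subst; auto. apply HA; lra. }
assert (HmT' : m = T).
{ destruct (Req_dec m T); auto. exfalso.
  destruct (H1 m ltac:(lra) Em) as [d [Hd Hd']].
  set (tau := m + Rmin d (T - m) / 2).
  assert (Hmin1 : Rmin d (T - m) <= d) by apply Rmin_l.
  assert (Hmin2 : Rmin d (T - m) <= T - m) by apply Rmin_r.
  assert (Hmin3 : 0 < Rmin d (T - m)) by (apply Rmin_case; lra).
  assert (E tau).
  { split. unfold tau; lra.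
    intros r Hr. destruct (Rle_dec r m). apply Em; lra.
    apply Hd'. unfold tau in Hr; lra. }
  assert (tau <= m) by (apply Hm1; auto). unfold tau in *; lra. }
intros s Hs. apply Em. lra.
Qed.

Lemma cont_into_Cb_bounded (w : R -> R -> R) (T : R) : cont_into_Cb w -> 0 <= T ->
  exists B, forall x s, 0 <= s <= T -> Rabs (w x s) <= B.
Proof.
intros [Hcb Hc] HT.
set (P := fun tau => exists B, forall x s, 0 <= s <= tau -> Rabs (w x s) <= B).
assert (Hloc : forall s, 0 <= s -> exists d B, 0 < d /\
   forall x s', 0 <= s' -> Rabs (s' - s) < d -> Rabs (w x s') <= B).
{ intros s Hs. destruct (Hc s Hs 1 Rlt_0_1) as [d [Hd Hd']].
  destruct (Hcb s Hs) as [_ [M HM]].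
  exists d, (M + 1). split; auto. intros x s' Hs' Hss.
  specialize (Hd' s' Hs' Hss x). specialize (HM x).
  replace (w x s') with (w x s + (w x s' - w x s)) by ring.
  eapply Rle_trans; [apply Rabs_triang|]. lra. }
assert (HP : forall s, 0 <= s <= T -> P s).
{ apply real_induction; auto.
  - intros s Hs HA. destruct (Hloc s (proj1 Hs)) as [d [B1 [Hd HB1]]].
    destruct (Req_dec s 0).
    + exists B1. intros x s' Hs'. apply HB1; [lra|]. subst. rewrite Rabs_right; lra.
    + destruct (HA (Rmax 0 (s - d/2))) as [B0 HB0].
      { split. apply Rmax_l. apply Rmax_case; lra. }
      exists (Rmax B0 B1). intros x s' Hs'.
      destruct (Rle_dec s' (Rmax 0 (s - d/2))).
      * eapply Rle_trans; [apply HB0; lra| apply Rmax_l].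
      * eapply Rle_trans; [apply HB1|apply Rmax_r]. lra.
        assert (s - d/2 <= Rmax 0 (s - d/2)) by apply Rmax_r.
        rewrite Rabs_left1; lra.
  - intros s Hs HA. destruct (Hloc s (proj1 Hs)) as [d [B1 [Hd HB1]]].
    destruct (HA s) as [B0 HB0]. lra.
    exists d. split; auto. intros r Hr.
    exists (Rmax B0 B1). intros x s' Hs'.
    destruct (Rle_dec s' s).
    * eapply Rle_trans; [apply HB0; lra| apply Rmax_l].
    * eapply Rle_trans; [apply HB1|apply Rmax_r]. lra.
      rewrite Rabs_right; lra. }
destruct (HP T) as [B HB]. lra. exists B. intros; apply HB; auto.
Qed.

Lemma nonincreasing_of_right_dini (f : R -> R) (T : R) : 0 <= T ->
  (forall t, 0 <= t <= T -> forall e, 0 < e -> exists d, 0 < d /\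
      forall s, 0 <= s <= T -> Rabs (s - t) < d -> Rabs (f s - f t) < e) ->
  (forall t, 0 <= t < T -> forall eta, 0 < eta -> exists d, 0 < d /\
      forall h, 0 < h < d -> f (t + h) <= f t + eta * h) ->
  f T <= f 0.
Proof.
intros HT Hc Hd.
assert (Heta : forall eta, 0 < eta -> f T <= f 0 + eta * T).
{ intros eta Heta.
  apply (real_induction (fun s => f s <= f 0 + eta * s) T); [lra| | |lra].
  - intros s Hs HA. destruct (Req_dec s 0) as [->|Hs0]; [lra|].
    destruct (Rle_dec (f s) (f 0 + eta * s)) as [|Hn]; auto. exfalso.
    set (e := (f s - f 0 - eta * s) / 2).
    destruct (Hc s Hs e) as [d [Hd0 Hd1]]; [unfold e; lra|].
    set (r := s - Rmin d s / 2).
    assert (0 < Rmin d s) by (apply Rmin_case; lra).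
    pose proof (Rmin_l d s). pose proof (Rmin_r d s).
    assert (Pr : f r <= f 0 + eta * r) by (apply HA; unfold r; lra).
    assert (Hr : Rabs (f r - f s) < e) by (apply Hd1; unfold r; [lra|rewrite Rabs_left; lra]).
    assert (eta * r <= eta * s) by (apply Rmult_le_compat_l; unfold r; lra).
    apply Rabs_def2 in Hr. unfold e in *. lra.
  - intros s Hs HA. destruct (Hd s Hs eta Heta) as [d [Hd0 Hd1]].
    exists d; split; auto. intros r Hr.
    specialize (Hd1 (r - s) ltac:(lra)). replace (s + (r - s)) with r in Hd1 by ring.
    specialize (HA s ltac:(lra)). nra. }
destruct (Rle_dec (f T) (f 0)) as [|Hn]; auto. exfalso.
set (eta := (f T - f 0) / (2 * (T + 1))).
assert (Heta0 : 0 < eta) by (apply Rdiv_lt_0_compat; lra).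
assert (eta * T < f T - f 0).
{ apply Rmult_lt_reg_r with (2 * (T + 1)); [lra|].
  replace (eta * T * (2 * (T + 1))) with ((f T - f 0) * T) by (unfold eta; field; lra). nra. }
specialize (Heta eta Heta0). lra.
Qed.

Lemma continuity_pt_of_eps_delta (f : R -> R) (x : R) :
  (forall e, 0 < e -> exists d, 0 < d /\ forall y, Rabs (y - x) < d -> Rabs (f y - f x) < e) ->
  continuity_pt f x.
Proof.
intros H e He. destruct (H e He) as [d [Hd H']]. exists d. split; auto.
intros y [_ Hy]. apply H'. exact Hy.
Qed.

(* Clamping time at 0 turns the one-sided data at t = 0 into functions on R,
   to which the mean value theorem applies. *)
Lemma cont_into_Cb_clamped (w : R -> R -> R) (x r : R) : cont_into_Cb w -> 0 <= r ->
  continuity_pt (fun s => w x (Rmax 0 s)) r.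
Proof.
intros [_ Hc] Hr. apply continuity_pt_of_eps_delta. intros e He.
destruct (Hc r Hr (e/2) ltac:(lra)) as [d [Hd H']].
exists d; split; auto. intros y Hy. rewrite (Rmax_right 0 r) by lra.
assert (Rabs (Rmax 0 y - r) <= Rabs (y - r)).
{ unfold Rmax; destruct Rle_dec; [apply Rle_refl|].
  rewrite (Rabs_left1 (0 - r)), (Rabs_left1 (y - r)) by lra; lra. }
eapply Rle_lt_trans; [apply H'; [apply Rmax_l|lra]|lra].
Qed.

Lemma Cb_deriv_is_derive (w dw : R -> R -> R) (x t : R) : Cb_deriv w dw -> 0 < t ->
  is_derive (fun s => w x s) t (dw x t).
Proof.
intros Hd Ht. apply is_derive_Reals. intros e He.
destruct (Hd t (Rlt_le _ _ Ht) (e/2) ltac:(lra)) as [d [Hd0 H']].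
assert (Hm : 0 < Rmin d t) by (apply Rmin_case; lra).
exists (mkposreal _ Hm). intros h Hh Hh'. simpl in Hh'.
pose proof (Rmin_l d t). pose proof (Rmin_r d t).
assert (Hht : Rabs h < t) by lra. apply Rabs_def2 in Hht.
specialize (H' (t + h)). replace (t + h - t) with h in H' by ring.
eapply Rle_lt_trans; [apply H'; [lra|intro; apply Hh; lra|lra]|lra].
Qed.

Lemma Cb_deriv_clamped (w dw : R -> R -> R) (x t : R) : Cb_deriv w dw -> 0 < t ->
  is_derive (fun s => w x (Rmax 0 s)) t (dw x t).
Proof.
intros Hd Ht. apply is_derive_ext_loc with (fun s => w x s); [|apply Cb_deriv_is_derive; auto].
assert (Hp : 0 < t) by auto.
exists (mkposreal t Hp). intros y Hy. simpl.
unfold ball in Hy; simpl in Hy; unfold AbsRing_ball, abs, minus, plus, opp in Hy; simpl in Hy.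
apply Rabs_def2 in Hy. rewrite Rmax_right; auto. lra.
Qed.

Lemma abs_le_of_derive_abs_le (g dg F dF : R -> R) (s : R) : 0 < s ->
  (forall r, 0 < r < s -> is_derive g r (dg r)) ->
  (forall r, 0 <= r <= s -> continuity_pt g r) ->
  (forall r, 0 < r < s -> is_derive F r (dF r)) ->
  (forall r, 0 <= r <= s -> continuity_pt F r) ->
  (forall r, 0 < r < s -> Rabs (dg r) <= dF r) ->
  g 0 = 0 -> F 0 = 0 -> Rabs (g s) <= F s.
Proof.
intros Hs Hg Hgc HF HFc Hb Hg0 HF0.
assert (Hmin : Rmin 0 s = 0) by (apply Rmin_left; lra).
assert (Hmax : Rmax 0 s = s) by (apply Rmax_right; lra).
set (D1 := fun r => if Rlt_dec 0 r then if Rlt_dec r s then dg r - dF r else 0 else 0).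
set (D2 := fun r => if Rlt_dec 0 r then if Rlt_dec r s then dg r + dF r else 0 else 0).
destruct (MVT_gen (fun r => g r - F r) 0 s D1) as [c [Hc Hc']].
{ intros x Hx. rewrite Hmin, Hmax in Hx. unfold D1.
  destruct (Rlt_dec 0 x); [|lra]. destruct (Rlt_dec x s); [|lra].
  apply (is_derive_minus g F); auto. }
{ intros x Hx. rewrite Hmin, Hmax in Hx. apply continuity_pt_minus; auto. }
destruct (MVT_gen (fun r => g r + F r) 0 s D2) as [c' [Hc2 Hc2']].
{ intros x Hx. rewrite Hmin, Hmax in Hx. unfold D2.
  destruct (Rlt_dec 0 x); [|lra]. destruct (Rlt_dec x s); [|lra].
  apply (is_derive_plus g F); auto. }
{ intros x Hx. rewrite Hmin, Hmax in Hx. apply continuity_pt_plus; auto. }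
rewrite Hg0, HF0 in Hc', Hc2'.
assert (D1 c <= 0).
{ unfold D1. destruct (Rlt_dec 0 c); [|lra]. destruct (Rlt_dec c s); [|lra].
  specialize (Hb c (conj r r0)). apply Rabs_le_between in Hb. lra. }
assert (D2 c' >= 0).
{ unfold D2. destruct (Rlt_dec 0 c'); [|lra]. destruct (Rlt_dec c' s); [|lra].
  specialize (Hb c' (conj r r0)). apply Rabs_le_between in Hb. lra. }
apply Rabs_le. split; nra.
Qed.

Section GronwallUniqueness.
Variables (Y Yd : R -> R -> R) (K B T : R).
Hypotheses (HK : 0 <= K) (HT : 0 <= T)
  (HYB : forall x s, 0 <= s <= T -> Rabs (Y x s) <= B)
  (HY0 : forall x, Y x 0 = 0)
  (HYd : forall x s, 0 < s <= T -> is_derive (fun r => Y x (Rmax 0 r)) s (Yd x s))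
  (HYc : forall x r, 0 <= r <= T -> continuity_pt (fun s => Y x (Rmax 0 s)) r)
  (HYdK : forall x s F, 0 <= s <= T -> (forall y, Rabs (Y y s) <= F) -> Rabs (Yd x s) <= K * F).

Lemma gronwall_power_bound n : forall x s, 0 <= s <= T ->
  Rabs (Y x s) <= B * (K * s) ^ n / INR (fact n).
Proof.
induction n as [|n IH]; intros x s Hs.
- simpl. unfold Rdiv. rewrite Rinv_1, !Rmult_1_r. auto.
- destruct (Req_dec s 0) as [->|Hs0].
  { rewrite HY0, Rabs_R0, Rmult_0_r. simpl. rewrite Rmult_0_l, Rmult_0_r.
    unfold Rdiv; rewrite Rmult_0_l; lra. }
  set (C := B * K ^ (S n) / INR (fact (S n))).
  replace (B * (K * s) ^ S n / INR (fact (S n))) with (C * s ^ S n)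
    by (unfold C; rewrite Rpow_mult_distr; field; apply INR_fact_neq_0).
  replace (Y x s) with ((fun r => Y x (Rmax 0 r)) s) by (simpl; rewrite Rmax_right; lra).
  apply (abs_le_of_derive_abs_le (fun r => Y x (Rmax 0 r)) (fun r => Yd x r) (fun r => C * r ^ (S n))
           (fun r => C * (INR (S n) * r ^ n))).
  + lra.
  + intros r Hr. apply HYd. lra.
  + intros r Hr. apply HYc. lra.
  + intros r Hr. auto_derive; auto. simpl. ring.
  + intros r Hr. apply continuity_pt_mult; [apply continuity_pt_const; intros a b; auto|].
    apply derivable_continuous_pt, derivable_pt_pow.
  + intros r Hr. eapply Rle_trans.
    * apply (HYdK x r (B * (K * r) ^ n / INR (fact n))); [lra|].
      intros y; apply IH; lra.
    * right. unfold C. rewrite fact_simpl, mult_INR, Rpow_mult_distr. simpl (K ^ S n).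
      field. split; [apply INR_fact_neq_0|apply not_0_INR; discriminate].
  + simpl. rewrite Rmax_left by lra. apply HY0.
  + simpl. ring.
Qed.

Lemma gronwall_zero x s : 0 <= s <= T -> Y x s = 0.
Proof.
intros Hs.
assert (HB0 : 0 <= B) by (eapply Rle_trans; [apply Rabs_pos|apply (HYB 0 0); lra]).
destruct (Req_dec (Y x s) 0) as [|Hn]; auto. exfalso.
assert (Hp : 0 < Rabs (Y x s)) by (apply Rabs_pos_lt; auto).
destruct (cv_speed_pow_fact (K * s) (Rabs (Y x s) / (B + 1))) as [N HN].
{ apply Rdiv_lt_0_compat; lra. }
specialize (HN N (Nat.le_refl N)). unfold R_dist in HN. rewrite Rminus_0_r in HN.
pose proof (gronwall_power_bound N x s Hs) as Hbound.
assert (0 <= (K * s) ^ N / INR (fact N)).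
{ apply Rmult_le_pos; [apply pow_le; nra|left; apply Rinv_0_lt_compat, INR_fact_lt_0]. }
rewrite Rabs_right in HN by lra.
assert (B * ((K * s) ^ N / INR (fact N)) <= B * (Rabs (Y x s) / (B + 1)))
  by (apply Rmult_le_compat_l; lra).
assert (B * (Rabs (Y x s) / (B + 1)) < Rabs (Y x s)).
{ apply Rmult_lt_reg_r with (B + 1); [lra|].
  replace (B * (Rabs (Y x s) / (B + 1)) * (B + 1)) with (B * Rabs (Y x s)) by (field; lra). nra. }
unfold Rdiv in *. lra.
Qed.

End GronwallUniqueness.

Lemma pospart_ge0 a : 0 <= pospart a.
Proof. unfold pospart. apply Rmax_l. Qed.
Lemma negpart_ge0 a : 0 <= negpart a.
Proof. unfold negpart. apply Rmax_l. Qed.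
Lemma pospart_add_negpart a : pospart a + negpart a = Rabs a.
Proof. unfold pospart, negpart, Rmax, Rabs. repeat destruct Rle_dec; destruct Rcase_abs; lra. Qed.
Lemma pospart_sub_negpart a : pospart a - negpart a = a.
Proof. unfold pospart, negpart, Rmax. repeat destruct Rle_dec; lra. Qed.
Lemma pospart_le_abs a : pospart a <= Rabs a.
Proof. rewrite <- pospart_add_negpart. pose proof (negpart_ge0 a). lra. Qed.
Lemma negpart_le_abs a : negpart a <= Rabs a.
Proof. rewrite <- pospart_add_negpart. pose proof (pospart_ge0 a). lra. Qed.

Definition upwind (eps : R) (w Z : R -> R) (x : R) : R :=
  / eps * (Z (x - eps) * pospart (w (x - eps)) - Z x * Rabs (w x) + Z (x + eps) * negpart (w (x + eps))).

Lemma is_C1_solution_upwind eps u v0 X Xd x t : is_C1_solution eps u v0 X Xd -> 0 <= t ->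
  Xd x t = upwind eps (fun y => u y t) (fun y => X y t) x.
Proof. intros [_ [_ [_ [_ Hode]]]] Ht. exact (Hode x t Ht). Qed.

Lemma upwind_minus eps w Z1 Z2 x :
  upwind eps w Z1 x - upwind eps w Z2 x = upwind eps w (fun y => Z1 y - Z2 y) x.
Proof. unfold upwind. ring. Qed.

Lemma upwind_abs_le eps M w Z F x : 0 < eps ->
  (forall y, Rabs (w y) <= M) -> (forall y, Rabs (Z y) <= F) ->
  Rabs (upwind eps w Z x) <= 3 * M / eps * F.
Proof.
intros Heps Hw HZ. unfold upwind.
set (a := pospart (w (x - eps))). set (b := negpart (w (x + eps))). set (c := Rabs (w x)).
assert (Ha : 0 <= a <= M).
{ split; [apply pospart_ge0|]. eapply Rle_trans; [apply pospart_le_abs|apply Hw]. }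
assert (Hb : 0 <= b <= M).
{ split; [apply negpart_ge0|]. eapply Rle_trans; [apply negpart_le_abs|apply Hw]. }
assert (Hc : 0 <= c <= M) by (split; [apply Rabs_pos|apply Hw]).
rewrite Rabs_mult, Rabs_right by (left; apply Rinv_0_lt_compat; auto).
replace (3 * M / eps * F) with (/ eps * (3 * M * F)) by (field; lra).
apply Rmult_le_compat_l; [left; apply Rinv_0_lt_compat; auto|].
pose proof (HZ (x - eps)). pose proof (HZ x). pose proof (HZ (x + eps)).
assert (0 <= F) by (eapply Rle_trans; [apply Rabs_pos|eauto]).
assert (Rabs (Z (x - eps) * a) <= F * M)
  by (rewrite Rabs_mult, (Rabs_right a) by lra; apply Rmult_le_compat; try apply Rabs_pos; lra).
assert (Rabs (Z x * c) <= F * M)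
  by (rewrite Rabs_mult, (Rabs_right c) by lra; apply Rmult_le_compat; try apply Rabs_pos; lra).
assert (Rabs (Z (x + eps) * b) <= F * M)
  by (rewrite Rabs_mult, (Rabs_right b) by lra; apply Rmult_le_compat; try apply Rabs_pos; lra).
pose proof (Rabs_triang (Z (x - eps) * a - Z x * c) (Z (x + eps) * b)).
pose proof (Rabs_triang (Z (x - eps) * a) (- (Z x * c))). rewrite Rabs_Ropp in *.
unfold Rminus in *. replace (3 * M * F) with (3 * (F * M)) by ring. lra.
Qed.

Lemma upwind_periodic eps w Z x : periodic_2pi w ->
  upwind eps w (fun y => Z (y + 2 * PI)) x = upwind eps w Z (x + 2 * PI).
Proof.
intros Hw. unfold upwind.
replace (x + 2 * PI - eps) with (x - eps + 2 * PI) by ring.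
replace (x + 2 * PI + eps) with (x + eps + 2 * PI) by ring.
rewrite !Hw. reflexivity.
Qed.

(* Uniqueness: the difference of the solution and its 2pi-translate solves the
   same linear system with zero datum. *)
Lemma is_C1_solution_periodic eps M1 u v0 X Xd : 0 < eps -> is_C1_solution eps u v0 X Xd ->
  (forall x t, 0 <= t -> Rabs (u x t) <= M1) ->
  (forall t, 0 <= t -> periodic_2pi (fun x => u x t)) -> periodic_2pi v0 ->
  forall t, 0 <= t -> periodic_2pi (fun x => X x t).
Proof.
intros Heps Hsol Hub Huper Hv0 t Ht.
pose proof Hsol as [HXc [_ [HXd [HX0 _]]]].
destruct (cont_into_Cb_bounded X t HXc Ht) as [B0 HB0].
set (Y := fun x s => X (x + 2 * PI) s - X x s).
assert (HY : forall x s, 0 <= s <= t -> Y x s = 0).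
{ apply (gronwall_zero Y (fun x s => Xd (x + 2 * PI) s - Xd x s) (3 * M1 / eps) (2 * B0) t).
  - assert (0 <= M1) by (eapply Rle_trans; [apply Rabs_pos|apply (Hub 0 0); lra]).
    apply Rmult_le_pos; [lra|left; apply Rinv_0_lt_compat; auto].
  - exact Ht.
  - intros x s Hs. unfold Y, Rminus. eapply Rle_trans; [apply Rabs_triang|].
    rewrite Rabs_Ropp. pose proof (HB0 (x + 2 * PI) s Hs). pose proof (HB0 x s Hs). lra.
  - intros x. unfold Y. rewrite !HX0, Hv0. ring.
  - intros x s Hs. unfold Y.
    apply (is_derive_minus (fun r => X (x + 2 * PI) (Rmax 0 r)) (fun r => X x (Rmax 0 r)));
    apply Cb_deriv_clamped; auto; lra.
  - intros x r Hr. unfold Y. apply continuity_pt_minus; apply cont_into_Cb_clamped; auto; lra.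
  - intros x s F Hs HF.
    rewrite !(is_C1_solution_upwind _ _ _ _ _ _ _ Hsol) by lra.
    rewrite <- upwind_periodic by (apply Huper; lra). rewrite upwind_minus.
    apply upwind_abs_le; auto. intros y. apply Hub. lra. }
intros x. specialize (HY x t ltac:(lra)). unfold Y in HY. lra.
Qed.

Lemma cont_into_Cb_contR w s : cont_into_Cb w -> 0 <= s -> contR (fun x => w x s).
Proof. intros [Hw _] Hs x. exact (proj1 (Hw s Hs) x). Qed.

Lemma periodic_shift (g : R -> R) (c : R) : contR g -> periodic_2pi g ->
  RInt (fun y => g (y + c)) (-PI) PI = RInt g (-PI) PI.
Proof.
intros Hg Hp. rewrite RInt_shiftR; auto.
rewrite <- (RInt_ChaslesR g (-PI + c) (-PI) (PI + c)); auto.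
rewrite <- (RInt_ChaslesR g (-PI) PI (PI + c)); auto.
assert (E : RInt g PI (PI + c) = RInt g (-PI) (-PI + c)).
{ replace PI with (-PI + 2 * PI) at 1 by ring.
  replace (PI + c) with (-PI + c + 2 * PI) by ring.
  rewrite <- RInt_shiftR; auto. apply RInt_ext. intros; apply Hp. }
rewrite E, (RInt_swapR g (-PI) (-PI + c)); auto. lra.
Qed.

Lemma RInt_upwind_periodic eps w Z : contR w -> contR Z -> periodic_2pi w -> periodic_2pi Z ->
  RInt (upwind eps w Z) (-PI) PI = 0.
Proof.
intros Hw HZ Hwp HZp.
set (f := fun y => Z y * pospart (w y)). set (g := fun y => Z y * negpart (w y)).
assert (Hf : contR f) by (apply contR_mult, contR_pospart; auto).
assert (Hg : contR g) by (apply contR_mult, contR_negpart; auto).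
assert (Hfp : periodic_2pi f) by (intros y; unfold f; rewrite HZp, Hwp; auto).
assert (Hgp : periodic_2pi g) by (intros y; unfold g; rewrite HZp, Hwp; auto).
assert (Hf' : contR (fun y => f (y + - eps))) by (apply contR_shift; auto).
assert (Hg' : contR (fun y => g (y + eps))) by (apply contR_shift; auto).
rewrite (RInt_extR _ (fun y => / eps * (f (y + - eps) - f y - g y + g (y + eps)))).
2:{ intros y _. unfold upwind, f, g. rewrite <- pospart_add_negpart.
    replace (y + - eps) with (y - eps) by ring. ring. }
rewrite RInt_scalR, RInt_plusR, !RInt_minusR, !periodic_shift;
  auto using contR_minus, contR_plus.
replace (RInt f (-PI) PI - RInt f (-PI) PI - RInt g (-PI) PI + RInt g (-PI) PI) with 0 by ring.
apply Rmult_0_r.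
Qed.

(* Positivity of the scheme: for h |w y| <= eps the explicit Euler step is a
   combination of Z (y - eps), Z y, Z (y + eps) with nonnegative weights. *)
Lemma abs_euler_upwind_le eps w Z h y : 0 < eps -> 0 <= h -> h * Rabs (w y) <= eps ->
  Rabs (Z y + h * upwind eps w Z y) <= Rabs (Z y) + h * upwind eps w (fun y => Rabs (Z y)) y.
Proof.
intros Heps Hh Hstep. unfold upwind.
set (k := h / eps). set (a := pospart (w (y - eps))). set (b := negpart (w (y + eps))).
assert (Hk : 0 <= k) by (unfold k; apply Rdiv_le_0_compat; lra).
assert (Hkw : 0 <= 1 - k * Rabs (w y)).
{ unfold k. apply Rmult_le_reg_r with eps; [lra|].
  replace ((1 - h / eps * Rabs (w y)) * eps) with (eps - h * Rabs (w y)) by (field; lra). lra. }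
assert (Ha : 0 <= a) by apply pospart_ge0. assert (Hb : 0 <= b) by apply negpart_ge0.
replace (Z y + h * (/ eps * (Z (y - eps) * a - Z y * Rabs (w y) + Z (y + eps) * b)))
  with (Z y * (1 - k * Rabs (w y)) + k * (Z (y - eps) * a) + k * (Z (y + eps) * b))
  by (unfold k; field; lra).
replace (Rabs (Z y) + h * (/ eps * (Rabs (Z (y - eps)) * a - Rabs (Z y) * Rabs (w y) + Rabs (Z (y + eps)) * b)))
  with (Rabs (Z y) * (1 - k * Rabs (w y)) + k * (Rabs (Z (y - eps)) * a) + k * (Rabs (Z (y + eps)) * b))
  by (unfold k; field; lra).
eapply Rle_trans; [apply Rabs_triang|]. apply Rplus_le_compat.
- eapply Rle_trans; [apply Rabs_triang|].
  rewrite !Rabs_mult, (Rabs_right (1 - _)), (Rabs_right k), (Rabs_right a) by lra. lra.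
- rewrite !Rabs_mult, (Rabs_right k), (Rabs_right b) by lra. lra.
Qed.

Lemma RInt_abs_time_continuous w a b t : cont_into_Cb w -> a < b -> 0 <= t ->
  forall e, 0 < e -> exists d, 0 < d /\ forall s, 0 <= s -> Rabs (s - t) < d ->
  Rabs (RInt (fun y => Rabs (w y s)) a b - RInt (fun y => Rabs (w y t)) a b) < e.
Proof.
intros Hw Hab Ht e He.
destruct (proj2 Hw t Ht (e / (2 * (b - a)))) as [d [Hd Hd']].
{ apply Rdiv_lt_0_compat; lra. }
exists d; split; auto. intros s Hs Hst.
assert (Hcs : contR (fun y => Rabs (w y s))) by (apply contR_abs, cont_into_Cb_contR; auto).
assert (Hct : contR (fun y => Rabs (w y t))) by (apply contR_abs, cont_into_Cb_contR; auto).
rewrite <- RInt_minusR by auto.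
eapply Rle_lt_trans; [apply RInt_absR; [lra|apply contR_minus; auto]|].
eapply Rle_lt_trans.
- apply RInt_leR with (g := fun _ => e / (2 * (b - a))); [lra|apply contR_abs, contR_minus; auto|apply contR_const|].
  intros x _. eapply Rle_trans; [apply Rabs_triang_inv2|apply Hd'; auto].
- rewrite RInt_constR. replace (e / (2 * (b - a)) * (b - a)) with (e / 2) by (field; lra). lra.
Qed.

Lemma upwind_contR eps w Z : contR w -> contR Z -> contR (upwind eps w Z).
Proof.
intros Hw HZ. unfold upwind. apply contR_scal, contR_plus; [apply contR_minus|].
- apply (contR_shift (fun y => Z y * pospart (w y))), contR_mult, contR_pospart; auto.
- apply contR_mult, contR_abs; auto.
- apply (contR_shift (fun y => Z y * negpart (w y))), contR_mult, contR_negpart; auto.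
Qed.

Lemma is_C1_solution_euler_step_le eps M1 u v0 X Xd tau eta : 0 < eps -> is_C1_solution eps u v0 X Xd ->
  (forall x, Rabs (u x tau) <= M1) -> 0 <= tau -> 0 < eta ->
  exists d, 0 < d /\ forall h, 0 < h < d -> forall y,
    Rabs (X y (tau + h)) <= Rabs (X y tau) + h * upwind eps (fun y => u y tau) (fun y => Rabs (X y tau)) y + h * eta.
Proof.
intros Heps Hsol Hub Htau Heta.
pose proof Hsol as [_ [_ [HXd _]]].
assert (HM1 : 0 <= M1) by (eapply Rle_trans; [apply Rabs_pos|apply (Hub 0)]).
destruct (HXd tau Htau eta Heta) as [d [Hd Hd']].
exists (Rmin d (eps / (M1 + 1))). split; [apply Rmin_case; auto; apply Rdiv_lt_0_compat; lra|].
intros h Hh y.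
assert (Hhd : h < d) by (eapply Rlt_le_trans; [apply Hh|apply Rmin_l]).
assert (Hstep : h * Rabs (u y tau) <= eps).
{ assert (h < eps / (M1 + 1)) by (eapply Rlt_le_trans; [apply Hh|apply Rmin_r]).
  apply Rmult_lt_compat_r with (r := M1 + 1) in H; [|lra].
  unfold Rdiv in H. rewrite Rmult_assoc, Rinv_l in H by lra.
  assert (h * Rabs (u y tau) <= h * M1) by (apply Rmult_le_compat_l; [lra|apply Hub]). nra. }
assert (Hq : Rabs (X y (tau + h) - (X y tau + h * Xd y tau)) <= h * eta).
{ specialize (Hd' (tau + h) ltac:(lra) ltac:(lra)).
  replace (tau + h - tau) with h in Hd' by ring.
  specialize (Hd' ltac:(rewrite Rabs_right; lra) y).
  replace (X y (tau + h) - (X y tau + h * Xd y tau))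
    with (h * ((X y (tau + h) - X y tau) / h - Xd y tau)) by (field; lra).
  rewrite Rabs_mult, Rabs_right by lra. apply Rmult_le_compat_l; lra. }
rewrite (is_C1_solution_upwind _ _ _ _ _ _ _ Hsol) in Hq by lra.
pose proof (abs_euler_upwind_le eps (fun y => u y tau) (fun y => X y tau) h y Heps ltac:(lra) Hstep).
pose proof (Rabs_triang_inv (X y (tau + h)) (X y tau + h * upwind eps (fun y => u y tau) (fun y => X y tau) y)).
lra.
Qed.

Lemma is_C1_solution_mass_le eps M1 u v0 X Xd : 0 < eps -> is_C1_solution eps u v0 X Xd ->
  (forall x t, 0 <= t -> Rabs (u x t) <= M1) ->
  (forall t, 0 <= t -> periodic_2pi (fun x => u x t)) -> periodic_2pi v0 ->
  (forall t, 0 <= t -> contR (fun x => u x t)) ->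
  forall t, 0 <= t ->
  RInt (fun y => Rabs (X y t)) (-PI) PI <= RInt (fun y => Rabs (v0 y)) (-PI) PI.
Proof.
intros Heps Hsol Hub Huper Hv0 Hucont t Ht.
pose proof (is_C1_solution_periodic eps M1 u v0 X Xd Heps Hsol Hub Huper Hv0) as HXp.
pose proof Hsol as [HXc [_ [_ [HX0 _]]]].
assert (HPI := PI_RGT_0).
set (m := fun s => RInt (fun y => Rabs (X y s)) (-PI) PI).
replace (RInt (fun y => Rabs (v0 y)) (-PI) PI) with (m 0)
  by (unfold m; apply RInt_ext; intros; rewrite HX0; auto).
apply (nonincreasing_of_right_dini m t Ht).
{ intros s Hs e He.
  destruct (RInt_abs_time_continuous X (-PI) PI s HXc ltac:(lra) (proj1 Hs) e He) as [d [Hd Hd']].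
  exists d; split; auto. intros r Hr. apply Hd'. lra. }
intros tau Htau eta Heta.
destruct (is_C1_solution_euler_step_le eps M1 u v0 X Xd tau (eta / (2 * PI))) as [d [Hd Hstep]];
  auto; [intros; apply Hub; lra|lra|apply Rdiv_lt_0_compat; lra|].
exists d. split; auto. intros h Hh.
set (AX := fun y => Rabs (X y tau)).
assert (HAX : contR AX) by (apply contR_abs, cont_into_Cb_contR; auto; lra).
assert (HAXp : periodic_2pi AX) by (intros y; unfold AX; rewrite (HXp tau (proj1 Htau) y); auto).
assert (Hu : contR (fun y => u y tau)) by (apply Hucont; lra).
assert (Hup := upwind_contR eps (fun y => u y tau) AX Hu HAX).
apply Rle_trans with (RInt (fun y => AX y + h * upwind eps (fun y => u y tau) AX y + h * (eta / (2 * PI))) (-PI) PI).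
- apply RInt_leR; [lra|apply contR_abs, cont_into_Cb_contR; auto; lra| |intros; apply Hstep; auto].
  apply contR_plus, contR_const. apply contR_plus, contR_scal; auto.
- rewrite !RInt_plusR, RInt_scalR, RInt_upwind_periodic, RInt_constR;
    auto using contR_plus, contR_scal, contR_const; [|apply Huper; lra].
  unfold m, AX. replace (h * (eta / (2 * PI)) * (PI - - PI)) with (eta * h) by (field; lra). lra.
Qed.

Lemma periodic_iter (g : R -> R) : periodic_2pi g -> forall n y, g (y + 2 * PI * INR n) = g y.
Proof.
intros Hp n. induction n as [|n IH]; intros y.
- simpl. f_equal. ring.
- rewrite S_INR. replace (y + 2 * PI * (INR n + 1)) with (y + 2 * PI * INR n + 2 * PI) by ring.
  rewrite Hp. apply IH.
Qed.

Lemma RInt_periodic_periods (g : R -> R) : contR g -> periodic_2pi g -> forall n,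
  RInt g (- PI - 2 * PI * INR n) (PI + 2 * PI * INR n) = (2 * INR n + 1) * RInt g (-PI) PI.
Proof.
intros Hc Hp n. induction n as [|n IH].
- simpl. replace (- PI - 2 * PI * 0) with (-PI) by ring. replace (PI + 2 * PI * 0) with PI by ring. lra.
- rewrite S_INR.
  rewrite <- (RInt_ChaslesR g _ (- PI - 2 * PI * INR n) _) by auto.
  rewrite <- (RInt_ChaslesR g (- PI - 2 * PI * INR n) (PI + 2 * PI * INR n) _) by auto.
  rewrite IH.
  assert (E1 : RInt g (PI + 2 * PI * INR n) (PI + 2 * PI * (INR n + 1)) = RInt g (-PI) PI).
  { replace (PI + 2 * PI * INR n) with (-PI + 2 * PI * INR (S n)) by (rewrite S_INR; ring).
    replace (PI + 2 * PI * (INR n + 1)) with (PI + 2 * PI * INR (S n)) by (rewrite S_INR; ring).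
    rewrite <- RInt_shiftR by auto. apply RInt_ext. intros; apply periodic_iter; auto. }
  assert (E2 : RInt g (- PI - 2 * PI * (INR n + 1)) (- PI - 2 * PI * INR n) = RInt g (-PI) PI).
  { replace (- PI - 2 * PI * (INR n + 1)) with (-PI + - (2 * PI * INR (S n))) by (rewrite S_INR; ring).
    replace (- PI - 2 * PI * INR n) with (PI + - (2 * PI * INR (S n))) by (rewrite S_INR; ring).
    rewrite <- RInt_shiftR by auto. apply RInt_ext. intros x _.
    rewrite <- (periodic_iter g Hp (S n) (x + - (2 * PI * INR (S n)))). f_equal. ring. }
  rewrite E1, E2. lra.
Qed.

Lemma RInt_periodic_window_le (a : R) : 0 <= a -> exists k, 0 <= k /\
  forall g, contR g -> periodic_2pi g -> (forall x, 0 <= g x) ->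
  RInt g (-a) a <= k * RInt g (-PI) PI.
Proof.
intros Ha. assert (HPI := PI_RGT_0).
destruct (INR_archimed (2 * PI) a ltac:(lra)) as [n Hn].
pose proof (pos_INR n).
exists (2 * INR n + 1). split; [lra|]. intros g Hc Hp Hpos.
rewrite <- RInt_periodic_periods by auto.
apply RInt_subinterval_le; auto; lra.
Qed.

Lemma RInt_local_integral_le (g : R -> R) (a b h : R) : a <= b -> 0 < h -> contR g ->
  (forall z, 0 <= g z) ->
  RInt (fun x => RInt g (x - h) (x + h)) a b <= 2 * h * RInt g (a - h) (b + h).
Proof.
intros Hab Hh Hg Hpos.
set (F := fun z => RInt g (a - h) z).
assert (HF : contR F) by (apply contR_RInt; auto).
assert (HF_le : forall z, z <= b + h -> F z <= F (b + h)).
{ intros z Hz. unfold F. rewrite <- (RInt_ChaslesR g (a - h) z (b + h)) by auto.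
  assert (0 <= RInt g z (b + h)) by (apply RInt_ge0R; auto). lra. }
rewrite (RInt_extR _ (fun x => F (x + h) - F (x + - h))).
2:{ intros x _. unfold F. rewrite <- (RInt_ChaslesR g (a - h) (x + - h) (x + h)) by auto.
    replace (x + - h) with (x - h) by ring. lra. }
rewrite RInt_minusR, !RInt_shiftR by (try apply contR_shift; auto).
rewrite <- (RInt_ChaslesR F (a + h) (b + - h) (b + h)),
        <- (RInt_ChaslesR F (a + - h) (a + h) (b + - h)) by auto.
assert (RInt F (b + - h) (b + h) <= 2 * h * F (b + h)).
{ rewrite Rmult_comm. replace (2 * h) with (b + h - (b + - h)) by ring. rewrite <- RInt_constR.
  apply RInt_leR; [lra|auto|apply contR_const|intros z Hz; apply HF_le; lra]. }
assert (0 <= RInt F (a + - h) (a + h)).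
{ apply RInt_ge0R; [lra|auto|intros z Hz; apply RInt_ge0R; auto; lra]. }
lra.
Qed.

Lemma filterlim_within_0_eps (f : R -> R) (D : R -> Prop) (l : R) :
  (forall e, 0 < e -> exists d, 0 < d /\ forall h, D h -> Rabs h < d -> Rabs (f h - l) < e) ->
  filterlim f (within D (locally 0)) (locally l).
Proof.
intros H. apply filterlim_locally. intros e.
destruct (H e (cond_pos e)) as [d [Hd H']].
exists (mkposreal d Hd). intros y Hy HD. apply H'; auto.
unfold ball in Hy; simpl in Hy; unfold AbsRing_ball, abs, minus, plus, opp in Hy; simpl in Hy.
rewrite Ropp_0, Rplus_0_r in Hy. auto.
Qed.

Lemma filterlim_at_right_0_eps (F : R -> R) :
  (forall e, 0 < e -> exists d, 0 < d /\ forall x, 0 < x < d -> Rabs (F x) < e) ->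
  filterlim F (at_right 0) (locally 0).
Proof.
intros H. apply filterlim_locally. intros e.
destruct (H e (cond_pos e)) as [d [Hd H']].
exists (mkposreal d Hd). intros y Hy HD.
unfold ball in Hy; simpl in Hy; unfold AbsRing_ball, abs, minus, plus, opp in Hy; simpl in Hy.
rewrite Ropp_0, Rplus_0_r in Hy.
unfold ball; simpl; unfold AbsRing_ball, abs, minus, plus, opp; simpl.
rewrite Ropp_0, Rplus_0_r. apply H'. apply Rabs_def2 in Hy. lra.
Qed.

Lemma Rpower_small (g : R) : 0 < g -> forall e, 0 < e -> exists d, 0 < d /\
  forall x, 0 < x < d -> Rpower x g < e.
Proof.
intros Hg e He. exists (Rpower e (/ g)). split. apply exp_pos.
intros x Hx. unfold Rpower in *.
assert (ln x < / g * ln e).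
{ rewrite <- (ln_exp (/ g * ln e)). apply ln_increasing; lra. }
rewrite <- (exp_ln e) by auto. apply exp_increasing.
apply Rmult_lt_compat_l with (r := g) in H; auto.
rewrite <- Rmult_assoc, Rinv_r, Rmult_1_l in H by lra. lra.
Qed.

Lemma lipschitz_of_derive_bounded (f : R -> R) (L x y : R) :
  (forall z, ex_derive f z) -> (forall z, Rabs (Derive f z) <= L) ->
  Rabs (f y - f x) <= L * Rabs (y - x).
Proof.
intros Hd HL.
destruct (MVT_gen f x y (Derive f)) as [c [_ Hc]].
{ intros; apply Derive_correct; auto. }
{ intros z _; apply continuity_pt_filterlim. exact (ex_derive_continuous f z (Hd z)). }
rewrite Hc, Rabs_mult. apply Rmult_le_compat_r. apply Rabs_pos. auto.
Qed.

Lemma taylor_remainder_le (f : R -> R) (M x h : R) :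
  (forall z, ex_derive f z) -> (forall z, ex_derive (Derive f) z) ->
  (forall z, Rmin x (x + h) <= z <= Rmax x (x + h) -> Rabs (Derive (Derive f) z) <= M) ->
  Rabs (f (x + h) - f x - h * Derive f x) <= M * (h * h).
Proof.
intros Hd Hd2 HM.
destruct (MVT_gen f x (x + h) (Derive f)) as [c [Hc Hc']].
{ intros; apply Derive_correct; auto. }
{ intros z _; apply continuity_pt_filterlim. exact (ex_derive_continuous f z (Hd z)). }
destruct (MVT_gen (Derive f) x c (Derive (Derive f))) as [c2 [Hc2 Hc2']].
{ intros; apply Derive_correct; auto. }
{ intros z _; apply continuity_pt_filterlim. exact (ex_derive_continuous (Derive f) z (Hd2 z)). }
rewrite Hc'. replace (x + h - x) with h by ring.
replace (Derive f c * h - h * Derive f x) with (h * (Derive f c - Derive f x)) by ring.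
rewrite Hc2'. rewrite Rabs_mult, Rabs_mult.
assert (Hr : Rmin x (x + h) <= c2 <= Rmax x (x + h)).
{ revert Hc Hc2. unfold Rmin, Rmax. repeat destruct Rle_dec; intros; lra. }
assert (Hcx : Rabs (c - x) <= Rabs h).
{ revert Hc. unfold Rmin, Rmax, Rabs. repeat destruct Rle_dec; repeat destruct Rcase_abs; intros; lra. }
specialize (HM c2 Hr).
assert (0 <= M) by (eapply Rle_trans; [apply Rabs_pos|eauto]).
assert (Rabs (Derive (Derive f) c2) * Rabs (c - x) <= M * Rabs h).
{ apply Rmult_le_compat; try apply Rabs_pos; auto. }
replace (h * h) with (Rabs h * Rabs h) by (rewrite <- Rabs_mult; apply Rabs_pos_eq; nra).
assert (0 <= Rabs h) by apply Rabs_pos. nra.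
Qed.

Lemma RInt_conv_contR (g mo : R -> R) (a b : R) : a <= b -> contR g -> contR mo ->
  contR (fun x => RInt (fun y => g (x - y) * mo y) a b).
Proof.
intros Hab Hg Hm x0.
apply continuity_pt_filterlim, continuity_pt_of_eps_delta. intros e He.
destruct (continuity_ab_maj (fun y => Rabs (mo y)) a b Hab) as [ym [Hym _]];
  [intros c _; apply contR_pointwise, contR_abs; auto|].
set (Mm := Rabs (mo ym)).
assert (HMm : 0 <= Mm) by apply Rabs_pos.
set (om := e / ((b - a) * Mm + 1)).
assert (Hom : 0 < om) by (unfold om; apply Rdiv_lt_0_compat; nra).
destruct (Heine g (fun z => x0 - b - 1 <= z <= x0 - a + 1) (compact_P3 _ _)
  (fun z _ => contR_pointwise g Hg z) (mkposreal om Hom)) as [dl Hdl].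
exists (Rmin 1 dl). split; [apply Rmin_case; [lra|apply cond_pos]|].
intros x Hx.
assert (Hx1 : Rabs (x - x0) < 1) by (eapply Rlt_le_trans; [apply Hx|apply Rmin_l]).
assert (Hx2 : Rabs (x - x0) < dl) by (eapply Rlt_le_trans; [apply Hx|apply Rmin_r]).
apply Rabs_def2 in Hx1.
assert (Hc : forall x, contR (fun y => g (x - y) * mo y))
  by (intros x'; apply contR_mult; [apply contR_reflect|]; auto).
rewrite <- RInt_minusR by auto.
eapply Rle_lt_trans; [apply RInt_absR; [auto|apply contR_minus; auto]|].
eapply Rle_lt_trans.
- apply RInt_leR with (g := fun _ => om * Mm); [auto|apply contR_abs, contR_minus; auto|apply contR_const|].
  intros y Hy.
  replace (g (x - y) * mo y - g (x0 - y) * mo y) with ((g (x - y) - g (x0 - y)) * mo y) by ring.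
  rewrite Rabs_mult. apply Rmult_le_compat; try apply Rabs_pos; [|apply Hym; auto].
  left. apply Hdl; [lra|lra|]. replace (x - y - (x0 - y)) with (x - x0) by ring. auto.
- rewrite RInt_constR. unfold om.
  replace (e / ((b - a) * Mm + 1) * Mm * (b - a)) with (e * ((b - a) * Mm / ((b - a) * Mm + 1)))
    by (field; nra).
  assert ((b - a) * Mm / ((b - a) * Mm + 1) < 1).
  { apply Rmult_lt_reg_r with ((b - a) * Mm + 1); [nra|].
    unfold Rdiv. rewrite Rmult_assoc, Rinv_l by nra. nra. }
  nra.
Qed.

Definition conv (P : R) (mo g : R -> R) (x : R) : R := RInt (fun y => g (x - y) * mo y) (-P) P.

Section Convolution.
Variables (P : R) (mo : R -> R).
Hypotheses (HP : 0 <= P) (Hmo : contR mo).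

Lemma conv_integrand_contR g x : contR g -> contR (fun y => g (x - y) * mo y).
Proof. intros Hg. apply contR_mult; [apply contR_reflect|]; auto. Qed.

Lemma conv_contR g : contR g -> contR (conv P mo g).
Proof. intros Hg. apply RInt_conv_contR; auto; lra. Qed.

Lemma conv_ext f g x : (forall z, f z = g z) -> conv P mo f x = conv P mo g x.
Proof. intros Hfg. unfold conv. apply RInt_extR. intros y _. rewrite Hfg. reflexivity. Qed.

Lemma conv_minus f g x : contR f -> contR g ->
  conv P mo (fun z => f z - g z) x = conv P mo f x - conv P mo g x.
Proof.
intros Hf Hg. unfold conv. rewrite <- RInt_minusR by (apply conv_integrand_contR; auto).
apply RInt_extR. intros y _. ring.
Qed.

Lemma conv_plus f g x : contR f -> contR g ->
  conv P mo (fun z => f z + g z) x = conv P mo f x + conv P mo g x.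
Proof.
intros Hf Hg. unfold conv. rewrite <- RInt_plusR by (apply conv_integrand_contR; auto).
apply RInt_extR. intros y _. ring.
Qed.

Lemma conv_shift g c x : conv P mo (fun z => g (z + c)) x = conv P mo g (x + c).
Proof. unfold conv. apply RInt_extR. intros y _. do 2 f_equal. ring. Qed.

Lemma conv_upwind eps w Z x : contR w -> contR Z ->
  conv P mo (upwind eps w Z) x =
  / eps * (conv P mo (fun z => Z z * pospart (w z)) (x - eps) - conv P mo (fun z => Z z * pospart (w z)) x
           - conv P mo (fun z => Z z * negpart (w z)) x + conv P mo (fun z => Z z * negpart (w z)) (x + eps)).
Proof.
intros Hw HZ.
set (f := fun z => Z z * pospart (w z)). set (g := fun z => Z z * negpart (w z)).
assert (Hf : contR f) by (apply contR_mult, contR_pospart; auto).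
assert (Hg : contR g) by (apply contR_mult, contR_negpart; auto).
assert (Hf' : contR (fun z => f (z + - eps))) by (apply contR_shift; auto).
assert (Hg' : contR (fun z => g (z + eps))) by (apply contR_shift; auto).
replace (x - eps) with (x + - eps) by ring.
rewrite <- !conv_shift, <- !conv_minus, <- conv_plus by auto using contR_minus.
unfold conv. rewrite <- RInt_scalR
  by (apply (conv_integrand_contR (fun z => f (z + - eps) - f z - g z + g (z + eps)));
      auto using contR_plus, contR_minus).
apply RInt_extR. intros y _. unfold upwind, f, g. rewrite <- pospart_add_negpart.
replace (x - y - eps) with (x - y + - eps) by ring. ring.
Qed.

End Convolution.

Section MollifierBounds.
Variables (P r Phi : R) (mo : R -> R).
Hypotheses (HP : 0 < P) (Hr : 0 < r <= 1) (Hmo : contR mo)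
  (Hmo_supp : forall y, r * P < Rabs y -> mo y = 0) (Hmo_bd : forall y, Rabs (mo y) <= Phi / r).

Let Hamo : contR (fun y => Rabs (mo y)) := contR_abs mo Hmo.
Let abs_integrand_contR Z x (HZ : contR Z) : contR (fun y => Rabs (Z (x - y)) * Rabs (mo y)) :=
  conv_integrand_contR _ Hamo (fun z => Rabs (Z z)) x (contR_abs Z HZ).

Lemma conv_abs_le_dominated g Z M x : contR g -> contR Z -> (forall z, Rabs (g z) <= M * Rabs (Z z)) ->
  Rabs (conv P mo g x) <= M * conv P (fun y => Rabs (mo y)) (fun z => Rabs (Z z)) x.
Proof.
intros Hg HZ HgZ. unfold conv.
eapply Rle_trans; [apply RInt_absR; [lra|apply conv_integrand_contR; auto]|].
rewrite <- RInt_scalR by (apply abs_integrand_contR; auto).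
apply RInt_leR; [lra|apply contR_abs, conv_integrand_contR; auto|apply contR_scal, abs_integrand_contR; auto|].
intros y _. rewrite Rabs_mult, <- Rmult_assoc.
apply Rmult_le_compat_r; [apply Rabs_pos|apply HgZ].
Qed.

Lemma conv_abs_le_window Z x : contR Z ->
  conv P (fun y => Rabs (mo y)) (fun z => Rabs (Z z)) x <= Phi / r * RInt (fun z => Rabs (Z z)) (x - r * P) (x + r * P).
Proof.
intros HZ. unfold conv.
assert (HAZ : contR (fun z => Rabs (Z z))) by (apply contR_abs; auto).
assert (Hq := abs_integrand_contR Z x HZ).
assert (HrP : r * P <= P) by nra.
rewrite <- (RInt_ChaslesR _ (-P) (- (r * P)) P), <- (RInt_ChaslesR _ (- (r * P)) (r * P) P) by auto.
rewrite (RInt_zeroR _ (-P) (- (r * P))), (RInt_zeroR _ (r * P) P).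
- rewrite <- (RInt_reflect (fun z => Rabs (Z z))) by auto.
  rewrite <- RInt_scalR by (apply (contR_reflect (fun z => Rabs (Z z))); auto).
  assert (RInt (fun y => Rabs (Z (x - y)) * Rabs (mo y)) (- (r * P)) (r * P) <=
          RInt (fun y => Phi / r * Rabs (Z (x - y))) (- (r * P)) (r * P)).
  { apply RInt_leR; [nra|auto|apply contR_scal, (contR_reflect (fun z => Rabs (Z z))); auto|].
    intros y _. rewrite Rmult_comm. apply Rmult_le_compat_r; [apply Rabs_pos|apply Hmo_bd]. }
  lra.
- intros y Hy. rewrite Rmin_left, Rmax_right in Hy by nra.
  rewrite Hmo_supp, Rabs_R0; [ring|rewrite Rabs_right; nra].
- intros y Hy. rewrite Rmin_left, Rmax_right in Hy by nra.
  rewrite Hmo_supp, Rabs_R0; [ring|rewrite Rabs_left; nra].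
Qed.

Lemma conv_commutator_le w Z Lu x : contR w -> contR Z ->
  (forall y, Rabs (w y - w x) <= Lu * Rabs (y - x)) -> 0 <= Lu ->
  Rabs (conv P mo (fun z => Z z * w z) x - w x * conv P mo Z x) <=
  Lu * (r * P) * conv P (fun y => Rabs (mo y)) (fun z => Rabs (Z z)) x.
Proof.
intros Hw HZ HLip HLu. unfold conv.
assert (H1 : contR (fun y => Z (x - y) * w (x - y) * mo y))
  by (apply (conv_integrand_contR mo Hmo (fun z => Z z * w z)), contR_mult; auto).
assert (H2 : contR (fun y => Z (x - y) * mo y)) by (apply (conv_integrand_contR mo Hmo Z); auto).
assert (H12 : contR (fun y => Z (x - y) * w (x - y) * mo y - w x * (Z (x - y) * mo y)))
  by (apply contR_minus, contR_scal; auto).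
rewrite <- RInt_scalR, <- RInt_minusR by auto using contR_scal.
eapply Rle_trans; [apply RInt_absR; [lra|auto]|].
rewrite <- RInt_scalR by (apply abs_integrand_contR; auto).
apply RInt_leR; [lra|apply contR_abs; auto|apply contR_scal, abs_integrand_contR; auto|].
- intros y _.
  replace (Z (x - y) * w (x - y) * mo y - w x * (Z (x - y) * mo y))
    with (Z (x - y) * mo y * (w (x - y) - w x)) by ring.
  rewrite !Rabs_mult.
  destruct (Rle_dec (Rabs y) (r * P)) as [Hy|Hy].
  + assert (Rabs (w (x - y) - w x) <= Lu * (r * P)).
    { eapply Rle_trans; [apply HLip|].
      replace (x - y - x) with (- y) by ring. rewrite Rabs_Ropp.
      apply Rmult_le_compat_l; auto. }
    assert (0 <= Rabs (Z (x - y)) * Rabs (mo y)) by (apply Rmult_le_pos; apply Rabs_pos).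
    rewrite (Rmult_comm (Lu * (r * P))). apply Rmult_le_compat_l; auto.
  + rewrite Hmo_supp by lra. rewrite Rabs_R0, !Rmult_0_r, Rmult_0_l.
    lra.
Qed.

Lemma RInt_conv_abs_le Z A : 0 <= A -> contR Z ->
  RInt (conv P (fun y => Rabs (mo y)) (fun z => Rabs (Z z))) (-A) A <=
  2 * P * Phi * RInt (fun z => Rabs (Z z)) (-A - r * P) (A + r * P).
Proof.
intros HA HZ.
assert (HAZ : contR (fun z => Rabs (Z z))) by (apply contR_abs; auto).
assert (HPhi : 0 <= Phi / r) by (eapply Rle_trans; [apply Rabs_pos|apply (Hmo_bd 0)]).
assert (HW : contR (fun x => RInt (fun z => Rabs (Z z)) (x - r * P) (x + r * P))).
{ apply (contR_ext (fun x => RInt (fun z => Rabs (Z z)) 0 (x + r * P) - RInt (fun z => Rabs (Z z)) 0 (x + - (r * P)))).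
  - intros x. rewrite <- (RInt_ChaslesR _ 0 (x + - (r * P)) (x + r * P)) by auto.
    replace (x + - (r * P)) with (x - r * P) by ring. ring.
  - apply contR_minus; apply (contR_shift (fun z => RInt _ 0 z)), contR_RInt; auto. }
apply Rle_trans with (RInt (fun x => Phi / r * RInt (fun z => Rabs (Z z)) (x - r * P) (x + r * P)) (-A) A).
- apply RInt_leR; [lra|apply (conv_contR P _ ltac:(lra) Hamo); auto|apply contR_scal; auto|].
  intros x _. apply conv_abs_le_window; auto.
- rewrite RInt_scalR by auto.
  replace (2 * P * Phi * RInt (fun z => Rabs (Z z)) (-A - r * P) (A + r * P))
    with (Phi / r * (2 * (r * P) * RInt (fun z => Rabs (Z z)) (-A - r * P) (A + r * P))) by (field; lra).
  apply Rmult_le_compat_l; auto. apply RInt_local_integral_le; auto; [lra|nra|intros; apply Rabs_pos].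
Qed.

End MollifierBounds.

Lemma RInt_shift_transfer (F psi : R -> R) (A c : R) : 1 <= A -> Rabs c <= 1 -> contR F -> contR psi ->
  (forall x, A - 1 < Rabs x -> psi x = 0) ->
  RInt (fun x => F (x + c) * psi x) (-A) A = RInt (fun x => F x * psi (x + - c)) (-A) A.
Proof.
intros HA Hc HF Hpsi Hsupp. apply Rabs_le_between in Hc.
set (f := fun x => F x * psi (x + - c)).
assert (Hf : contR f) by (apply contR_mult, contR_shift; auto).
assert (Hf0 : forall x, A - 1 < Rabs (x + - c) -> f x = 0) by (intros x Hx; unfold f; rewrite Hsupp; [ring|auto]).
rewrite (RInt_extR _ (fun x => f (x + c))) by (intros x _; unfold f; do 2 f_equal; ring).
rewrite RInt_shiftR by auto.
rewrite <- (RInt_ChaslesR f (-A + c) (-A) (A + c)), <- (RInt_ChaslesR f (-A) A (A + c)) by auto.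
rewrite (RInt_zeroR f (-A + c) (-A)), (RInt_zeroR f A (A + c)); [lra| |];
  intros x Hx; apply Hf0; revert Hx; unfold Rmin, Rmax, Rabs;
  repeat destruct Rle_dec; destruct Rcase_abs; intros; lra.
Qed.

Section WeakResidual.
Variables (eps M1 P r Phi Lu A Psi1 Psi2 L : R) (w Z Zd mo psi : R -> R).
Hypotheses (Heps : 0 < eps <= 1) (HP : 0 < P) (Hr : 0 < r <= 1) (HA : 1 <= A) (HLu : 0 <= Lu)
  (Hmo : contR mo) (Hmo_supp : forall y, r * P < Rabs y -> mo y = 0)
  (Hmo_bd : forall y, Rabs (mo y) <= Phi / r)
  (Hw : contR w) (Hw_bd : forall y, Rabs (w y) <= M1)
  (Hw_lip : forall x y, Rabs (w y - w x) <= Lu * Rabs (y - x))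
  (HZ : contR Z) (HZd : forall x, Zd x = upwind eps w Z x)
  (Hpsi : contR psi) (Hpsi' : contR (Derive psi)) (Hpsi_supp : forall x, A - 1 < Rabs x -> psi x = 0)
  (HPsi1 : forall x, -A <= x <= A -> Rabs (Derive psi x) <= Psi1)
  (HPsi2 : forall x h, -A <= x <= A -> Rabs h <= 1 ->
             Rabs (psi (x + h) - psi x - h * Derive psi x) <= Psi2 * (h * h))
  (HL : RInt (fun z => Rabs (Z z)) (-A - P) (A + P) <= L).

Let Ga := conv P mo (fun z => Z z * pospart (w z)).
Let Gb := conv P mo (fun z => Z z * negpart (w z)).
Let V := conv P mo Z.
Let Q := conv P (fun y => Rabs (mo y)) (fun z => Rabs (Z z)).
Let Dpsi h x := (psi (x + h) - psi x - h * Derive psi x) / eps.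

Let HGa : contR Ga := conv_contR P mo (Rlt_le _ _ HP) Hmo _ (contR_mult _ _ HZ (contR_pospart w Hw)).
Let HGb : contR Gb := conv_contR P mo (Rlt_le _ _ HP) Hmo _ (contR_mult _ _ HZ (contR_negpart w Hw)).
Let HV : contR V := conv_contR P mo (Rlt_le _ _ HP) Hmo Z HZ.

(* Discrete integration by parts moves the upwind differences onto psi. *)
Lemma RInt_residual_eq :
  RInt (fun x => conv P mo Zd x * psi x - w x * V x * Derive psi x) (-A) A =
  RInt (fun x => Ga x * Dpsi eps x + Gb x * Dpsi (- eps) x + (Ga x - Gb x - w x * V x) * Derive psi x) (-A) A.
Proof.
assert (Hpsi_sh : forall c, contR (fun x => psi (x + c))) by (intros; apply contR_shift; auto).
assert (HGa_sh : contR (fun x => Ga (x + - eps))) by (apply contR_shift; auto).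
assert (HGb_sh : contR (fun x => Gb (x + eps))) by (apply contR_shift; auto).
assert (Hrest : contR (fun x => w x * V x * Derive psi x)) by (repeat apply contR_mult; auto).
assert (Hconv : forall x, conv P mo Zd x =
  / eps * (Ga (x + - eps) - Ga x - Gb x + Gb (x + eps))).
{ intros x. unfold conv at 1. rewrite (RInt_extR _ (fun y => upwind eps w Z (x - y) * mo y))
    by (intros y _; rewrite HZd; auto).
  fold (conv P mo (upwind eps w Z) x). rewrite conv_upwind by (auto; lra).
  replace (x + - eps) with (x - eps) by ring. reflexivity. }
rewrite (RInt_extR (fun x => conv P mo Zd x * psi x - w x * V x * Derive psi x)
  (fun x => / eps * (Ga (x + - eps) * psi x - Ga x * psi x - Gb x * psi x + Gb (x + eps) * psi x)
            - w x * V x * Derive psi x)) by (intros x _; rewrite Hconv; ring).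
rewrite (RInt_extR (fun x => Ga x * Dpsi eps x + Gb x * Dpsi (- eps) x + (Ga x - Gb x - w x * V x) * Derive psi x)
  (fun x => / eps * (Ga x * psi (x + eps) - Ga x * psi x - Gb x * psi x + Gb x * psi (x + - eps))
            - w x * V x * Derive psi x)) by (intros x _; unfold Dpsi; field; lra).
rewrite !RInt_minusR, !RInt_scalR, !RInt_plusR, !RInt_minusR
  by auto 10 using contR_mult, contR_minus, contR_plus, contR_scal.
rewrite (RInt_shift_transfer Ga psi A (- eps)), (RInt_shift_transfer Gb psi A eps)
  by (auto; rewrite ?Rabs_Ropp, Rabs_right; lra).
replace (- - eps) with eps by ring. reflexivity.
Qed.

Lemma residual_integrand_le x : -A <= x <= A ->
  Rabs (Ga x * Dpsi eps x + Gb x * Dpsi (- eps) x + (Ga x - Gb x - w x * V x) * Derive psi x) <=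
  (2 * M1 * Psi2 * eps + Psi1 * Lu * r * P) * Q x.
Proof.
intros Hx.
assert (HQ : 0 <= Q x).
{ unfold Q, conv. apply RInt_ge0R; [lra|apply (conv_integrand_contR _ (contR_abs _ Hmo) (fun z => Rabs (Z z))), contR_abs; auto|].
  intros; apply Rmult_le_pos; apply Rabs_pos. }
assert (HGa_bd : Rabs (Ga x) <= M1 * Q x).
{ apply (conv_abs_le_dominated P mo); auto; [apply contR_mult, contR_pospart; auto|].
  intros z. rewrite Rabs_mult, Rmult_comm, Rabs_right by (apply Rle_ge, pospart_ge0).
  apply Rmult_le_compat_r; [apply Rabs_pos|]. eapply Rle_trans; [apply pospart_le_abs|apply Hw_bd]. }
assert (HGb_bd : Rabs (Gb x) <= M1 * Q x).
{ apply (conv_abs_le_dominated P mo); auto; [apply contR_mult, contR_negpart; auto|].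
  intros z. rewrite Rabs_mult, Rmult_comm, Rabs_right by (apply Rle_ge, negpart_ge0).
  apply Rmult_le_compat_r; [apply Rabs_pos|]. eapply Rle_trans; [apply negpart_le_abs|apply Hw_bd]. }
assert (Hcomm : Rabs (Ga x - Gb x - w x * V x) <= Lu * (r * P) * Q x).
{ unfold Ga, Gb. rewrite <- conv_minus by (auto; try lra; apply contR_mult; auto using contR_pospart, contR_negpart).
  rewrite (conv_ext P mo _ (fun z => Z z * w z))
    by (intros z; rewrite <- Rmult_minus_distr_l, pospart_sub_negpart; reflexivity).
  apply (conv_commutator_le P r mo); auto. }
assert (HD : forall h, Rabs h = eps -> Rabs (Dpsi h x) <= Psi2 * eps).
{ intros h Hh. unfold Dpsi, Rdiv. rewrite Rabs_mult, Rabs_inv, (Rabs_right eps) by lra.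
  apply Rmult_le_reg_r with eps; [lra|]. rewrite Rmult_assoc, Rinv_l by lra.
  assert (Hhh : h * h = eps * eps) by (rewrite <- Hh, <- Rabs_mult, Rabs_right; nra).
  rewrite Rmult_1_r, Rmult_assoc, <- Hhh. apply HPsi2; lra. }
specialize (HD eps ltac:(rewrite Rabs_right; lra)) as HD1.
specialize (HD (- eps) ltac:(rewrite Rabs_Ropp, Rabs_right; lra)) as HD2.
specialize (HPsi1 x Hx).
pose proof (Rabs_triang (Ga x * Dpsi eps x + Gb x * Dpsi (- eps) x) ((Ga x - Gb x - w x * V x) * Derive psi x)).
pose proof (Rabs_triang (Ga x * Dpsi eps x) (Gb x * Dpsi (- eps) x)).
rewrite !Rabs_mult in *.
assert (Rabs (Ga x) * Rabs (Dpsi eps x) <= M1 * Q x * (Psi2 * eps)) by (apply Rmult_le_compat; auto using Rabs_pos).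
assert (Rabs (Gb x) * Rabs (Dpsi (- eps) x) <= M1 * Q x * (Psi2 * eps)) by (apply Rmult_le_compat; auto using Rabs_pos).
assert (Rabs (Ga x - Gb x - w x * V x) * Rabs (Derive psi x) <= Lu * (r * P) * Q x * Psi1)
  by (apply Rmult_le_compat; auto using Rabs_pos).
nra.
Qed.

Lemma weak_residual_le :
  Rabs (RInt (fun x => conv P mo Zd x * psi x - w x * V x * Derive psi x) (-A) A) <=
  2 * P * Phi * L * (2 * M1 * Psi2 * eps + Psi1 * Lu * r * P).
Proof.
set (kap := 2 * M1 * Psi2 * eps + Psi1 * Lu * r * P).
assert (HQ : contR Q) by (apply conv_contR; [lra|apply contR_abs|apply contR_abs]; auto).
assert (HE : contR (fun x => Ga x * Dpsi eps x + Gb x * Dpsi (- eps) x + (Ga x - Gb x - w x * V x) * Derive psi x)).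
{ assert (HD : forall h, contR (Dpsi h)).
  { intros h. apply (contR_ext (fun x => / eps * (psi (x + h) - psi x - h * Derive psi x))).
    - intros x. unfold Dpsi, Rdiv. ring.
    - apply contR_scal, contR_minus; [apply contR_minus; [apply contR_shift|]|apply contR_scal]; auto. }
  apply contR_plus; [apply contR_plus|]; apply contR_mult; auto.
  apply contR_minus; [apply contR_minus|apply contR_mult]; auto. }
assert (HM1 : 0 <= M1) by (eapply Rle_trans; [apply Rabs_pos|apply (Hw_bd 0)]).
assert (HPsi1' : 0 <= Psi1) by (eapply Rle_trans; [apply Rabs_pos|apply (HPsi1 0)]; lra).
assert (HPsi2' : 0 <= Psi2).
{ specialize (HPsi2 0 1 ltac:(lra) ltac:(rewrite Rabs_R1; lra)).
  assert (0 <= Psi2 * (1 * 1)) by (eapply Rle_trans; [apply Rabs_pos|exact HPsi2]). lra. }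
assert (Hkap : 0 <= kap).
{ unfold kap. assert (0 <= Psi1 * Lu * r * P) by (repeat apply Rmult_le_pos; lra).
  assert (0 <= 2 * M1 * Psi2 * eps) by (repeat apply Rmult_le_pos; lra). lra. }
assert (HPhi : 0 <= Phi).
{ assert (0 <= Phi / r) by (eapply Rle_trans; [apply Rabs_pos|apply (Hmo_bd 0)]).
  apply Rmult_le_reg_r with (/ r); [apply Rinv_0_lt_compat; lra|lra]. }
assert (HQint : RInt Q (-A) A <= 2 * P * Phi * L).
{ eapply Rle_trans; [apply (RInt_conv_abs_le P r Phi mo); auto; lra|].
  apply Rmult_le_compat_l; [nra|]. eapply Rle_trans; [|exact HL].
  apply RInt_subinterval_le; [nra|nra|nra|apply contR_abs; auto|intros; apply Rabs_pos]. }
rewrite RInt_residual_eq.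
eapply Rle_trans; [apply RInt_absR; [lra|exact HE]|].
eapply Rle_trans; [apply RInt_leR with (g := fun x => kap * Q x);
                   [lra|apply contR_abs; auto|apply contR_scal; auto|apply residual_integrand_le]|].
rewrite RInt_scalR by auto.
replace (2 * P * Phi * L * kap) with (kap * (2 * P * Phi * L)) by ring.
apply Rmult_le_compat_l; auto.
Qed.

End WeakResidual.

Lemma compact_support_radius f : compact_support f -> exists P, 0 < P /\ forall z, P <= Rabs z -> f z = 0.
Proof.
intros [P0 HP0]. exists (Rmax P0 0 + 1). pose proof (Rmax_l P0 0). pose proof (Rmax_r P0 0).
split; [lra|]. intros z Hz. apply HP0. lra.
Qed.

Lemma smooth_contR f : smooth f -> contR f.
Proof. intros Hf x. exact (ex_derive_continuous f x (Hf 1%nat x)). Qed.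

Lemma contR_bounded_of_compact_support f P : contR f -> (forall z, P <= Rabs z -> f z = 0) ->
  exists M, forall z, Rabs (f z) <= M.
Proof.
intros Hf Hsupp.
destruct (Rle_dec 0 P) as [HP|HP]; [|exists 0; intros z; rewrite Hsupp, Rabs_R0 by (pose proof (Rabs_pos z); lra); lra].
destruct (continuity_ab_maj (fun z => Rabs (f z)) (-P) P) as [zm [Hzm _]];
  [lra|intros c _; apply contR_pointwise, contR_abs; auto|].
exists (Rabs (f zm)). intros z. destruct (Rle_dec P (Rabs z)) as [Hz|Hz].
- rewrite Hsupp, Rabs_R0 by auto. apply Rabs_pos.
- apply Hzm. apply Rabs_le_between. lra.
Qed.

Lemma Rpower_between_0_1 eps alpha : 0 < eps < 1 -> 0 < alpha -> 0 < Rpower eps alpha < 1.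
Proof.
intros Heps Halpha. split; [apply exp_pos|]. unfold Rpower. rewrite <- exp_0. apply exp_increasing.
assert (ln eps < 0) by (rewrite <- ln_1; apply ln_increasing; lra). nra.
Qed.

Section Mollifier.
Variables (phi : R -> R) (alpha eps P Phi : R).
Hypotheses (Hphi : contR phi) (Hphi_supp : forall z, P <= Rabs z -> phi z = 0)
  (Hphi_bd : forall z, Rabs (phi z) <= Phi) (Hr : 0 < Rpower eps alpha).

Lemma mollif_contR : contR (mollif phi alpha eps).
Proof.
unfold mollif. apply contR_scal, (contR_comp (fun y => y / Rpower eps alpha) phi); auto.
apply (contR_mult (fun y => y)); [apply contR_id|apply contR_const].
Qed.

Lemma mollif_support y : Rpower eps alpha * P < Rabs y -> mollif phi alpha eps y = 0.
Proof.
intros Hy. unfold mollif. rewrite Hphi_supp; [ring|].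
unfold Rdiv. rewrite Rabs_mult, Rabs_inv, (Rabs_right (Rpower eps alpha)) by lra.
apply Rmult_le_reg_r with (Rpower eps alpha); [lra|]. rewrite Rmult_assoc, Rinv_l by lra. lra.
Qed.

Lemma mollif_bound y : Rabs (mollif phi alpha eps y) <= Phi / Rpower eps alpha.
Proof.
unfold mollif. rewrite Rabs_mult, Rabs_inv, (Rabs_right (Rpower eps alpha)) by lra.
unfold Rdiv. rewrite Rmult_comm. apply Rmult_le_compat_r; [left; apply Rinv_0_lt_compat; lra|auto].
Qed.

Lemma vconv_conv (Y : R -> R -> R) x t : Rpower eps alpha <= 1 -> 0 < P -> contR (fun z => Y z t) ->
  vconv phi alpha eps Y x t = conv P (mollif phi alpha eps) (fun z => Y z t) x.
Proof.
intros Hr1 HP HY. unfold vconv.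
apply Rint_R_compact_support; [lra|apply ex_RInt_contR, (conv_integrand_contR _ mollif_contR (fun z => Y z t)); auto|auto|].
intros y Hy. rewrite mollif_support by nra. ring.
Qed.

End Mollifier.

Lemma tderiv_conv (w dw : R -> R -> R) (mo f : R -> R) (P B x t : R) :
  0 < P -> 0 <= t -> cont_into_Cb w -> Cb_deriv w dw -> contR (fun z => dw z t) ->
  contR mo -> (forall y, Rabs (mo y) <= B) ->
  (forall s, 0 <= s -> f s = conv P mo (fun z => w z s) x) ->
  tderiv f t (conv P mo (fun z => dw z t) x).
Proof.
intros HP Ht Hw Hdw Hdwt Hmo HB Hf. unfold tderiv. apply filterlim_within_0_eps. intros e He.
assert (HB0 : 0 <= B) by (eapply Rle_trans; [apply Rabs_pos|apply (HB 0)]).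
set (eta := e / (2 * P * B + 1)).
assert (Heta : 0 < eta) by (unfold eta; apply Rdiv_lt_0_compat; nra).
destruct (Hdw t Ht eta Heta) as [d [Hd Hd']].
exists d; split; auto. intros h [Hh0 Hth] Hhd.
rewrite !Hf by lra. unfold conv.
set (g := fun y => ((w (x - y) (t + h) - w (x - y) t) / h - dw (x - y) t) * mo y).
assert (Hwc : forall s, 0 <= s -> contR (fun y => w (x - y) s * mo y))
  by (intros s Hs; apply (conv_integrand_contR _ Hmo (fun z => w z s)), cont_into_Cb_contR; auto).
assert (Hdwc : contR (fun y => dw (x - y) t * mo y)) by (apply (conv_integrand_contR _ Hmo (fun z => dw z t)); auto).
assert (Hg : contR g).
{ apply (contR_ext (fun y => / h * (w (x - y) (t + h) * mo y - w (x - y) t * mo y) - dw (x - y) t * mo y)).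
  - intros y. unfold g. field. auto.
  - apply contR_minus, Hdwc. apply contR_scal, contR_minus; apply Hwc; lra. }
replace ((RInt (fun y => w (x - y) (t + h) * mo y) (-P) P - RInt (fun y => w (x - y) t * mo y) (-P) P) / h
         - RInt (fun y => dw (x - y) t * mo y) (-P) P) with (RInt g (-P) P).
2:{ rewrite (RInt_extR g (fun y => / h * (w (x - y) (t + h) * mo y - w (x - y) t * mo y) - dw (x - y) t * mo y))
      by (intros y _; unfold g; field; auto).
    rewrite RInt_minusR, RInt_scalR, RInt_minusR by (auto using contR_scal, contR_minus; apply Hwc; lra).
    unfold Rdiv. rewrite (Rmult_comm (_ - _)). reflexivity. }
eapply Rle_lt_trans; [apply RInt_absR; [lra|auto]|].
eapply Rle_lt_trans.
- apply RInt_leR with (g := fun _ => eta * B); [lra|apply contR_abs; auto|apply contR_const|].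
  intros y _. unfold g. rewrite Rabs_mult. apply Rmult_le_compat; try apply Rabs_pos; [|apply HB].
  specialize (Hd' (t + h) Hth). replace (t + h - t) with h in Hd' by ring.
  apply Hd'; auto. intros Ht'. apply Hh0. lra.
- rewrite RInt_constR. unfold eta.
  replace (e / (2 * P * B + 1) * B * (P - - P)) with (e * (2 * P * B / (2 * P * B + 1))) by (field; nra).
  assert (2 * P * B / (2 * P * B + 1) < 1).
  { apply Rmult_lt_reg_r with (2 * P * B + 1); [nra|].
    unfold Rdiv. rewrite Rmult_assoc, Rinv_l by nra. nra. }
  nra.
Qed.

Lemma smooth_Derive_contR f : smooth f -> contR (Derive f).
Proof. intros Hf x. exact (ex_derive_continuous _ x (Hf 2%nat x)). Qed.

Definition test_function_bounds (psi : R -> R) (A Psi1 Psi2 : R) : Prop :=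
  1 <= A /\ (forall x, A - 1 < Rabs x -> psi x = 0) /\
  (forall x, A - 1 < Rabs x -> Derive psi x = 0) /\
  (forall x, -A <= x <= A -> Rabs (Derive psi x) <= Psi1) /\
  (forall x h, -A <= x <= A -> Rabs h <= 1 ->
     Rabs (psi (x + h) - psi x - h * Derive psi x) <= Psi2 * (h * h)).

Lemma test_function_bounds_exist psi : smooth psi -> compact_support psi ->
  exists A Psi1 Psi2, test_function_bounds psi A Psi1 Psi2.
Proof.
intros Hpsi [A0 HA0].
assert (Hd1 : forall z, ex_derive psi z) by (intros z; exact (Hpsi 1%nat z)).
assert (Hd2 : forall z, ex_derive (Derive psi) z) by (intros z; exact (Hpsi 2%nat z)).
assert (Hc1 : contR (Derive psi)) by (intros z; exact (ex_derive_continuous _ z (Hd2 z))).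
assert (Hc2 : contR (Derive (Derive psi))) by (intros z; exact (ex_derive_continuous _ z (Hpsi 3%nat z))).
set (A := Rmax A0 0 + 2). pose proof (Rmax_l A0 0). pose proof (Rmax_r A0 0).
destruct (continuity_ab_maj (fun z => Rabs (Derive psi z)) (-A) A) as [z1 [Hz1 _]];
  [unfold A; lra|intros c _; apply contR_pointwise, contR_abs; auto|].
destruct (continuity_ab_maj (fun z => Rabs (Derive (Derive psi) z)) (-A - 1) (A + 1)) as [z2 [Hz2 _]];
  [unfold A; lra|intros c _; apply contR_pointwise, contR_abs; auto|].
exists A, (Rabs (Derive psi z1)), (Rabs (Derive (Derive psi) z2)). repeat split.
- unfold A; lra.
- intros x Hx. apply HA0. unfold A in Hx. lra.
- intros x Hx. rewrite (Derive_ext_loc psi (fun _ => 0)); [apply Derive_const|].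
  assert (Hp : 0 < Rabs x - (A - 1)) by lra.
  exists (mkposreal _ Hp). intros y Hy. change R in y. apply HA0.
  change (Rabs (y - x) < Rabs x - (A - 1)) in Hy. rewrite Rabs_minus_sym in Hy.
  pose proof (Rabs_triang_inv x (x - y)). replace (x - (x - y)) with y in * by ring.
  unfold A in *. lra.
- intros x Hx. apply Hz1. exact Hx.
- intros x h Hx Hh. apply taylor_remainder_le; auto.
  intros z Hz. apply Hz2. apply Rabs_le_between in Hh. revert Hz. unfold Rmin, Rmax.
  repeat destruct Rle_dec; intros; lra.
Qed.

Lemma filterlim_power_bound (F : R -> R) (K1 K2 g : R) : 0 < g ->
  (forall eps, 0 < eps < 1 -> Rabs (F eps) <= K1 * eps + K2 * Rpower eps g) ->
  filterlim F (at_right 0) (locally 0).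
Proof.
intros Hg HF0.
assert (HF : forall eps, 0 < eps < 1 -> Rabs (F eps) <= Rmax K1 0 * eps + Rmax K2 0 * Rpower eps g).
{ intros eps Heps. eapply Rle_trans; [apply HF0; auto|].
  assert (0 < Rpower eps g) by apply exp_pos.
  apply Rplus_le_compat; apply Rmult_le_compat_r; try lra; apply Rmax_l. }
clear HF0. assert (HK1 : 0 <= Rmax K1 0) by apply Rmax_r. assert (HK2 : 0 <= Rmax K2 0) by apply Rmax_r.
revert HF HK1 HK2. generalize (Rmax K1 0) (Rmax K2 0). clear K1 K2. intros K1 K2 HF HK1 HK2.
apply filterlim_at_right_0_eps. intros e He.
destruct (Rpower_small g Hg (e / (2 * (K2 + 1)))) as [d1 [Hd1 Hd1']];
  [apply Rdiv_lt_0_compat; lra|].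
set (d2 := e / (2 * (K1 + 1))).
assert (Hd2 : 0 < d2) by (apply Rdiv_lt_0_compat; lra).
exists (Rmin 1 (Rmin d1 d2)). split; [repeat apply Rmin_case; lra|].
intros x Hx.
pose proof (Rmin_l 1 (Rmin d1 d2)). pose proof (Rmin_r 1 (Rmin d1 d2)).
pose proof (Rmin_l d1 d2). pose proof (Rmin_r d1 d2).
specialize (Hd1' x ltac:(lra)).
assert (HK1x : K1 * x <= K1 * d2) by (apply Rmult_le_compat_l; lra).
assert (HK2x : K2 * Rpower x g <= K2 * (e / (2 * (K2 + 1)))) by (apply Rmult_le_compat_l; lra).
assert (K1 * d2 < e / 2).
{ unfold d2. replace (K1 * (e / (2 * (K1 + 1)))) with (e / 2 * (K1 / (K1 + 1))) by (field; lra).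
  assert (K1 / (K1 + 1) < 1) by (apply Rmult_lt_reg_r with (K1 + 1); [lra|];
    unfold Rdiv; rewrite Rmult_assoc, Rinv_l by lra; lra).
  nra. }
assert (K2 * (e / (2 * (K2 + 1))) < e / 2).
{ replace (K2 * (e / (2 * (K2 + 1)))) with (e / 2 * (K2 / (K2 + 1))) by (field; lra).
  assert (K2 / (K2 + 1) < 1) by (apply Rmult_lt_reg_r with (K2 + 1); [lra|];
    unfold Rdiv; rewrite Rmult_assoc, Rinv_l by lra; lra).
  nra. }
eapply Rle_lt_trans; [apply HF; lra|]. lra.
Qed.

Lemma uniform_local_mass (u : R -> R -> R -> R) (v0 : R -> R -> R) (X Xd : R -> R -> R -> R) (M1 t A : R) :
  0 <= t -> 0 <= A ->
  (forall eps t, 0 < eps < 1 -> 0 <= t -> periodic_2pi (fun x => u eps x t)) ->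
  (forall eps, 0 < eps < 1 -> cont_into_Cb (u eps)) ->
  (forall eps x t, 0 < eps < 1 -> 0 <= t -> Rabs (u eps x t) <= M1) ->
  (forall eps, 0 < eps < 1 -> periodic_2pi (v0 eps)) ->
  (exists C, forall eps, 0 < eps < 1 -> RInt (fun x => Rabs (v0 eps x)) (- PI) PI <= C) ->
  (forall eps, 0 < eps < 1 -> is_C1_solution eps (u eps) (v0 eps) (X eps) (Xd eps)) ->
  exists L, forall eps, 0 < eps < 1 -> RInt (fun z => Rabs (X eps z t)) (-A) A <= L.
Proof.
intros Ht HA Hu_per Hu_cont Hu_bd Hv0 [C HC] HX.
destruct (RInt_periodic_window_le A HA) as [k [Hk Hwin]].
exists (k * C). intros eps Heps.
pose proof (HX eps Heps) as Hsol.
assert (HXc : contR (fun z => X eps z t)) by (apply cont_into_Cb_contR; [apply Hsol|auto]).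
eapply Rle_trans; [apply Hwin|].
- apply contR_abs; auto.
- intros z. cbv beta. rewrite (is_C1_solution_periodic eps M1 (u eps) (v0 eps) (X eps) (Xd eps)); auto; lra.
- intros z. apply Rabs_pos.
- apply Rmult_le_compat_l; auto. eapply Rle_trans; [|exact (HC eps Heps)].
  apply (is_C1_solution_mass_le eps M1 (u eps) (v0 eps) (X eps) (Xd eps)); auto; try lra.
  intros s Hs. apply cont_into_Cb_contR; auto.
Qed.

Lemma mollified_residual_le (eps alpha beta M1 Lc P Phi A Psi1 Psi2 L t : R)
  (u X Xd : R -> R -> R) (v0 phi psi : R -> R) :
  0 < eps < 1 -> 0 < alpha -> 0 <= t -> 0 < P ->
  is_C1_solution eps u v0 X Xd -> cont_into_Cb u -> (forall x, Rabs (u x t) <= M1) ->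
  (forall x, ex_derive (fun y => u y t) x) ->
  (forall x, Rabs (Derive (fun y => u y t) x) <= Lc * Rpower eps (- beta)) ->
  contR phi -> (forall z, P <= Rabs z -> phi z = 0) -> (forall z, Rabs (phi z) <= Phi) ->
  smooth psi -> test_function_bounds psi A Psi1 Psi2 ->
  RInt (fun z => Rabs (X z t)) (- (A + P)) (A + P) <= L ->
  Rabs (Rint_R (fun x => conv P (mollif phi alpha eps) (fun z => Xd z t) x * psi x
                         - u x t * vconv phi alpha eps X x t * Derive psi x))
  <= 2 * P * Phi * L * (2 * M1 * Psi2) * eps
     + 2 * P * Phi * L * (Psi1 * Lc * P) * Rpower eps (alpha - beta).
Proof.
intros Heps Halpha Ht HP Hsol Hu_cb Hu_bd Hu_dx Hu_lip Hphi Hphi_supp Hphi_bd Hpsi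
  [HA [Hpsi_supp [Hdpsi_supp [HPsi1 HPsi2]]]] HL.
pose proof (Rpower_between_0_1 eps alpha Heps Halpha) as Hr.
assert (HLc : 0 <= Lc).
{ specialize (Hu_lip 0). pose proof (Rabs_pos (Derive (fun y => u y t) 0)).
  assert (0 < Rpower eps (- beta)) by apply exp_pos. nra. }
assert (Hmo := mollif_contR phi alpha eps Hphi).
assert (Hu : contR (fun x => u x t)) by (apply cont_into_Cb_contR; auto).
assert (HXt : contR (fun z => X z t)) by (apply cont_into_Cb_contR; [apply Hsol|auto]).
assert (HXdt : contR (fun z => Xd z t)) by (apply cont_into_Cb_contR; [apply Hsol|auto]).
rewrite (Rint_R_compact_support _
           (fun x => conv P (mollif phi alpha eps) (fun z => Xd z t) x * psi x
                     - u x t * conv P (mollif phi alpha eps) (fun z => X z t) x * Derive psi x) A).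
- eapply Rle_trans.
  + apply (weak_residual_le eps M1 P (Rpower eps alpha) Phi (Lc * Rpower eps (- beta)) A Psi1 Psi2 L
             (fun x => u x t) (fun z => X z t) (fun z => Xd z t) (mollif phi alpha eps) psi);
      auto using smooth_contR, smooth_Derive_contR; try lra.
    * apply Rmult_le_pos; [auto|left; apply exp_pos].
    * apply (mollif_support phi alpha eps P); auto. lra.
    * apply (mollif_bound phi alpha eps Phi); auto. lra.
    * intros x y. apply (lipschitz_of_derive_bounded (fun y => u y t)); auto.
    * intros x. apply (is_C1_solution_upwind eps u v0); auto.
    * replace (-A - P) with (- (A + P)) by ring. auto.
  + right. replace (alpha - beta) with (- beta + alpha) by ring. rewrite Rpower_plus. ring.
- lra.
- apply ex_RInt_contR, contR_minus; apply contR_mult; auto using smooth_contR, smooth_Derive_contR;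
    [|apply contR_mult; auto]; apply conv_contR; auto; lra.
- intros x Hx. rewrite (vconv_conv phi alpha eps P); auto; lra.
- intros x Hx. rewrite Hpsi_supp, Hdpsi_supp by lra. ring.
Qed.

Theorem lemma2
  (alpha beta M1 : R) (u : R -> R -> R -> R) (v0 : R -> R -> R)
  (X Xd : R -> R -> R -> R) (phi : R -> R)
  (Halpha : 0 < alpha <= 1)
  (HM1 : 0 < M1)
  (Hu_per : forall eps t, 0 < eps < 1 -> 0 <= t -> periodic_2pi (fun x => u eps x t))
  (Hu_dx : forall eps x t, 0 < eps < 1 -> 0 <= t -> ex_derive (fun y => u eps y t) x)
  (Hu_cont : forall eps, 0 < eps < 1 -> cont_into_Cb (u eps))
  (Hu_bd : forall eps x t, 0 < eps < 1 -> 0 <= t -> Rabs (u eps x t) <= M1)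
  (Hv0 : forall eps, 0 < eps < 1 -> in_Cb (v0 eps) /\ periodic_2pi (v0 eps))
  (Hv0_L1 : exists C, forall eps, 0 < eps < 1 ->
              RInt (fun x => Rabs (v0 eps x)) (- PI) PI <= C)
  (HX : forall eps, 0 < eps < 1 -> is_C1_solution eps (u eps) (v0 eps) (X eps) (Xd eps))
  (Hphi : smooth phi /\ compact_support phi /\ Rint_R phi = 1)
  (Hbeta : 0 < beta < alpha)
  (Hux : forall delta, 0 < delta -> exists c, forall eps x t,
           0 < eps < 1 -> 0 <= t <= delta ->
           Rabs (Derive (fun y => u eps y t) x) <= c * Rpower eps (- beta)) :
  exists dv : R -> R -> R -> R,
    (forall eps x t, 0 < eps < 1 -> 0 <= t ->
       tderiv (fun s => vconv phi alpha eps (X eps) x s) t (dv eps x t)) /\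
    (forall psi : R -> R, smooth psi -> compact_support psi -> forall t, 0 <= t ->
       filterlim
         (fun eps => Rint_R (fun x =>
            dv eps x t * psi x
            - u eps x t * vconv phi alpha eps (X eps) x t * Derive psi x))
         (at_right 0) (locally 0)).
Proof.
destruct Hphi as [Hphi_smooth [Hphi_supp _]].
pose proof (smooth_contR phi Hphi_smooth) as Hphi_c.
destruct (compact_support_radius phi Hphi_supp) as [P [HP HphiP]].
destruct (contR_bounded_of_compact_support phi P Hphi_c HphiP) as [Phi HPhi].
exists (fun eps x t => conv P (mollif phi alpha eps) (fun z => Xd eps z t) x). split.
- intros eps x t Heps Ht.
  pose proof (Rpower_between_0_1 eps alpha Heps ltac:(lra)) as Hr.
  destruct (HX eps Heps) as [HXcb [HXdcb [HXd _]]].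
  apply (tderiv_conv (X eps) (Xd eps) _ _ P (Phi / Rpower eps alpha)); auto.
  + apply cont_into_Cb_contR; auto.
  + apply mollif_contR; auto.
  + apply mollif_bound; auto; lra.
  + intros s Hs. apply (vconv_conv phi alpha eps P); auto; try lra.
    apply cont_into_Cb_contR; auto.
- intros psi Hpsi Hpsi_supp t Ht.
  destruct (test_function_bounds_exist psi Hpsi Hpsi_supp) as [A [Psi1 [Psi2 Hbounds]]].
  destruct (uniform_local_mass u v0 X Xd M1 t (A + P)) as [L HL]; auto.
  { pose proof (proj1 Hbounds). lra. }
  { intros eps Heps. apply Hv0. auto. }
  destruct (Hux (t + 1)) as [c Hc]; [lra|].
  eapply (filterlim_power_bound _ _ _ (alpha - beta)); [lra|].
  intros eps Heps. apply (mollified_residual_le eps alpha beta M1 c P Phi A Psi1 Psi2 L t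
                            (u eps) (X eps) (Xd eps) (v0 eps) phi psi); auto; try lra.
  + intros x. apply Hc; auto; lra.
Qed.
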